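(* For $i=1,2$ let $f_i\colon[a_i,b_i]\to(0,\infty)$ be smooth, let $x$ be a $C^1$ function, and consider on $[a_i,b_i]\times\mathbb S^2$ the initial data $g_i=ds^2+f_i(s)^2\gamma_*$, $K_i=x'(f_i(s))ds^2+x(f_i(s))f_i(s)\gamma_*$, with energy density $\mu_i$. Assume (i) $\mu_i>0$ on $[a_i,b_i]$ for $i=1,2$; (ii) $f_1(b_1)<f_2(a_2)$; (iii) $0<f_1'(b_1)<\sqrt{1+x(f_1(b_1))^2+2x(f_1(b_1))x'(f_1(b_1))f_1(b_1)}$; (iv) $f_2'(a_2)\le f_1'(b_1)$; (v) $G_x$ is monotone non-decreasing on $[f_1(b_1),f_2(a_2)]$. Then, after an appropriate translation of the interval $[a_2,b_2]$ (so that $b_1\le a_2$), there exists a smooth positive function $f\colon[a_1,b_2]\to(0,\infty)$ such that (I) $f=f_1$ on $[a_1,\frac{a_1+b_1}2]$, (II) $f=f_2$ on $[\frac{a_2+b_2}2,b_2]$, and (III) the initial data set on $[a_1,b_2]\times\mathbb S^2$ given by $g=ds^2+f(s)^2\gamma_*$, $K=x'(f(s))ds^2+x(f(s))f(s)\gamma_*$ has energy density $\mu_f>0$ on $[a_1,b_2]$.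
   Context: $\gamma_*$ denotes the standard round metric on $\mathbb S^2$. Energy density of an initial data set: $\mu=\tfrac12(R(g)+(\operatorname{tr}_gK)^2-|K|^2_g)$. $G_x(r)=x(r)^2+2x(r)x'(r)r$. *)

From Stdlib Require Import Reals.
From Coquelicot Require Import Coquelicot.
Open Scope R_scope.

Definition smooth (f : R -> R) : Prop :=
  forall (n : nat) (s : R), ex_derive_n f n s.

(* x is C^1 on (0, +oo), the range where it is evaluated (r = f(s) > 0). *)
Definition C1_pos (x : R -> R) : Prop :=
  forall r, 0 < r -> ex_derive x r /\ continuous (Derive x) r.

Definition G (x : R -> R) (r : R) : R :=
  x r ^ 2 + 2 * x r * Derive x r * r.

(* Energy density mu = 1/2 (R(g) + (tr_g K)^2 - |K|_g^2) of the initial data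
   g = ds^2 + f(s)^2 gamma_*, K = x'(f) ds^2 + x(f) f gamma_* on I x S^2,
   written out explicitly.  With
     R(g) = 2 (1 - f'^2)/f^2 - 4 f''/f,
     tr_g K = x'(f) + 2 x(f)/f,   |K|^2 = x'(f)^2 + 2 x(f)^2/f^2,
   one gets
     mu = (1 - f'^2 + x(f)^2 + 2 x(f) x'(f) f - 2 f f'') / f^2. *)
Definition mu (x f : R -> R) (s : R) : R :=
  let r := f s in
  (1 - (Derive f s) ^ 2 + x r ^ 2 + 2 * x r * Derive x r * r
     - 2 * r * Derive_n f 2 s) / r ^ 2.

(* Since [mu = mu_num / f^2] with [mu_num r v k = 1 - v^2 + G_x(r) - 2 r k], positivity of [mu]
   is an open condition on the 2-jet [(f, f', f'')], affine and decreasing in the curvature [k].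
   The new profile follows [f1], then a straight line of slope [c'] close to [f1'(b1)], then a
   translate of [f2].  Near [b1] the curvature of [f1] is switched off by a smooth cutoff over a
   short window: the jet barely moves, and positivity survives by convexity in [k], at [k = 0]
   thanks to (iii).  Along the line [mu_num = 1 - c'^2 + G_x(r)] stays positive because [G_x] is
   nondecreasing between [f1(b1)] and [f2(a2)] (v).  Near [a2] the same cutoff is applied to
   [f2], together with a bending term of curvature [-mu] spread over a longer window, [mu] being
   tuned so that the slope where the bend starts is exactly [c'].  There, with
   [m = 1 - c^2 + G_x(f2(a2))] and [c = f1'(b1)], either the slope [v] satisfies
   [v^2 <= 1 + G_x - m/2] and [mu] is not too negative, or the slope is steep; by (iv) the
   latter forces [f2'(a2) < -c] and a large [mu > 0], and then the term [2 r mu] dominates. *)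

From Stdlib Require Import Reals Lra Psatz Lia FunctionalExtensionality.
From Coquelicot Require Import Coquelicot.
Open Scope R_scope.

(** * Smooth functions *)

Lemma smooth_of_Derive_closed (P : (R -> R) -> Prop) :
  (forall g, P g -> (forall s, ex_derive g s) /\ P (Derive g)) ->
  forall f, P f -> smooth f.
Proof.
  intros HP f Pf.
  assert (Pn : forall n, P (Derive_n f n)).
  { induction n as [|n IH]; [exact Pf|apply (HP _ IH)]. }
  intros [|n] s; [exact I|apply (HP _ (Pn n))].
Qed.

Lemma smooth_ex_derive f s : smooth f -> ex_derive f s.
Proof. intros Hf; exact (Hf 1%nat s). Qed.

Lemma smooth_Derive f : smooth f -> smooth (Derive f).
Proof.
  intros Hf [|n] s; [exact I|].
  apply (ex_derive_ext (Derive_n f (S n))); [|exact (Hf (S (S n)) s)].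
  intros y; rewrite (Derive_n_comp f n 1), Nat.add_1_r; reflexivity.
Qed.

Lemma ex_derive_Derive g s : smooth g -> ex_derive (Derive g) s.
Proof. intros Hg; apply smooth_ex_derive, smooth_Derive, Hg. Qed.

Lemma smooth_Derive2 f : smooth f -> smooth (Derive_n f 2).
Proof. intros Hf; exact (smooth_Derive _ (smooth_Derive _ Hf)). Qed.

Lemma smooth_continuous f s : smooth f -> continuous f s.
Proof.
  intros Hf; apply (@ex_derive_continuous R_AbsRing R_NormedModule).
  apply smooth_ex_derive, Hf.
Qed.

Lemma smooth_ext f g : (forall s, f s = g s) -> smooth f -> smooth g.
Proof. intros E Hf; replace g with f; [exact Hf|apply functional_extensionality, E]. Qed.

Lemma smooth_affine c d : smooth (fun u => c * u + d).
Proof.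
  apply (smooth_of_Derive_closed (fun h => exists c d, h = fun u => c * u + d)); [|now exists c, d].
  intros g [c' [d' ->]]; split; [intros; auto_derive; auto|].
  exists 0, c'; apply functional_extensionality; intros u.
  apply is_derive_unique; auto_derive; auto; ring.
Qed.

Lemma smooth_const c : smooth (fun _ => c).
Proof. apply (smooth_ext (fun u => 0 * u + c)); [intros; ring|apply smooth_affine]. Qed.

Inductive sum_of_products : (R -> R) -> Prop :=
  | sop_mult f g : smooth f -> smooth g -> sum_of_products (fun s => f s * g s)
  | sop_plus h1 h2 : sum_of_products h1 -> sum_of_products h2 ->
      sum_of_products (fun s => h1 s + h2 s).

Lemma sum_of_products_ex_derive h s : sum_of_products h -> ex_derive h s.
Proof.
  induction 1.
  - apply ex_derive_mult; apply smooth_ex_derive; assumption.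
  - apply (ex_derive_plus h1 h2); assumption.
Qed.

Lemma sum_of_products_Derive h : sum_of_products h -> sum_of_products (Derive h).
Proof.
  induction 1 as [f g Hf Hg|h1 h2 H1 IH1 H2 IH2].
  - replace (Derive (fun s => f s * g s))
      with (fun s => (fun s => Derive f s * g s) s + (fun s => f s * Derive g s) s).
    + constructor; constructor; auto using smooth_Derive.
    + apply functional_extensionality; intros s.
      rewrite Derive_mult; auto using smooth_ex_derive.
  - replace (Derive (fun s => h1 s + h2 s)) with (fun s => Derive h1 s + Derive h2 s).
    + constructor; assumption.
    + apply functional_extensionality; intros s.
      rewrite Derive_plus; auto using sum_of_products_ex_derive.
Qed.

Lemma smooth_sum_of_products h : sum_of_products h -> smooth h.
Proof.
  apply smooth_of_Derive_closed; intros g Hg.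
  split; [intros; apply sum_of_products_ex_derive, Hg|apply sum_of_products_Derive, Hg].
Qed.

Lemma smooth_mult f g : smooth f -> smooth g -> smooth (fun s => f s * g s).
Proof. intros; apply smooth_sum_of_products; constructor; assumption. Qed.

Lemma smooth_plus f g : smooth f -> smooth g -> smooth (fun s => f s + g s).
Proof.
  intros Hf Hg; apply (smooth_ext (fun s => f s * 1 + g s * 1)); [intros; ring|].
  apply smooth_sum_of_products; repeat constructor; auto using smooth_const.
Qed.

Lemma smooth_scal k f : smooth f -> smooth (fun s => k * f s).
Proof. intros; apply smooth_mult; auto using smooth_const. Qed.

Lemma smooth_minus f g : smooth f -> smooth g -> smooth (fun s => f s - g s).
Proof.
  intros Hf Hg; apply (smooth_ext (fun s => f s + -1 * g s)); [intros; ring|].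
  apply smooth_plus; auto using smooth_scal.
Qed.

Lemma smooth_comp_affine f a b : smooth f -> smooth (fun s => f (a * s + b)).
Proof.
  intros Hf.
  apply (smooth_of_Derive_closed
           (fun h => exists g k, smooth g /\ h = fun s => k * g (a * s + b))).
  2:{ exists f, 1; split; [exact Hf|]. apply functional_extensionality; intros; ring. }
  intros h [g [k [Hg ->]]].
  assert (D : forall s, is_derive (fun s => k * g (a * s + b)) s (k * a * Derive g (a * s + b))).
  { intros s; rewrite Rmult_assoc; apply (is_derive_scal (fun s => g (a * s + b))).
    apply (is_derive_comp g (fun s => a * s + b)).
    - apply Derive_correct, smooth_ex_derive, Hg.
    - auto_derive; auto; ring. }
  split; [intros s; eexists; apply D|].
  exists (Derive g), (k * a); split; [apply smooth_Derive, Hg|].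
  apply functional_extensionality; intros s; apply is_derive_unique, D.
Qed.

Lemma smooth_shift f t : smooth f -> smooth (fun s => f (s - t)).
Proof.
  intros Hf; apply (smooth_ext (fun s => f (1 * s + - t))); [intros; f_equal; ring|].
  apply smooth_comp_affine, Hf.
Qed.

Definition integral_from (g : R -> R) (p s : R) : R := RInt g p s.

Lemma is_derive_integral_from g p s : smooth g -> is_derive (integral_from g p) s (g s).
Proof.
  intros Hg; apply (is_derive_RInt g _ p); [|apply smooth_continuous, Hg].
  apply filter_forall; intros y; apply (@RInt_correct R_CompleteNormedModule).
  apply (@ex_RInt_continuous R_CompleteNormedModule); intros; apply smooth_continuous, Hg.
Qed.

Lemma integral_from_at g p : integral_from g p p = 0.
Proof. exact (RInt_point p g). Qed.

Lemma smooth_integral_from g p : smooth g -> smooth (integral_from g p).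
Proof.
  intros Hg.
  apply (smooth_of_Derive_closed (fun h => h = integral_from g p \/ smooth h)); [|now left].
  intros h [->|Hh].
  - split; [intros s; eexists; apply is_derive_integral_from, Hg|right].
    apply (smooth_ext g); [|exact Hg].
    intros s; symmetry; apply is_derive_unique, is_derive_integral_from, Hg.
  - split; [intros; apply smooth_ex_derive, Hh|right; apply smooth_Derive, Hh].
Qed.

(** * Mean value estimates and second-order contact *)

Lemma MVT_Derive F a b : (forall u, ex_derive F u) ->
  exists c, Rmin a b <= c <= Rmax a b /\ F b - F a = Derive F c * (b - a).
Proof.
  intros HF; apply MVT_gen.
  - intros u _; apply Derive_correct, HF.
  - intros u _; apply continuity_pt_filterlim, (@ex_derive_continuous R_AbsRing R_NormedModule), HF.
Qed.

Lemma Derive_bound_abs F a b M : (forall u, ex_derive F u) ->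
  (forall u, Rmin a b <= u <= Rmax a b -> Rabs (Derive F u) <= M) ->
  Rabs (F b - F a) <= M * Rabs (b - a).
Proof.
  intros HF HM; destruct (MVT_Derive F a b HF) as [c [Hc ->]].
  rewrite Rabs_mult; apply Rmult_le_compat_r; [apply Rabs_pos|apply HM, Hc].
Qed.

Lemma eq_of_Derive_zero F a b : (forall u, ex_derive F u) ->
  (forall u, Rmin a b <= u <= Rmax a b -> Derive F u = 0) -> F a = F b.
Proof.
  intros HF HD.
  assert (B : Rabs (F b - F a) <= 0 * Rabs (b - a)).
  { apply Derive_bound_abs; [exact HF|intros u Hu; rewrite HD by exact Hu; rewrite Rabs_R0; lra]. }
  rewrite Rmult_0_l in B; pose proof (Rabs_pos (F b - F a)).
  symmetry; apply Rminus_diag_uniq, Rabs_eq_0; lra.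
Qed.

Lemma incr_of_Derive_nonneg F a b : (forall u, ex_derive F u) -> a <= b ->
  (forall u, a <= u <= b -> 0 <= Derive F u) -> F a <= F b.
Proof.
  intros HF Hab HD; destruct (MVT_Derive F a b HF) as [c [Hc E]].
  rewrite Rmin_left, Rmax_right in Hc by lra.
  assert (0 <= Derive F c * (b - a)) by (apply Rmult_le_pos; [apply HD, Hc|lra]); lra.
Qed.

Lemma decr_of_Derive_nonpos F a b : (forall u, ex_derive F u) -> a <= b ->
  (forall u, a <= u <= b -> Derive F u <= 0) -> F b <= F a.
Proof.
  intros HF Hab HD; destruct (MVT_Derive F a b HF) as [c [Hc E]].
  rewrite Rmin_left, Rmax_right in Hc by lra.
  assert (Derive F c * (b - a) <= 0) by (apply Rmult_le_0_r; [apply HD, Hc|lra]); lra.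
Qed.

Lemma between_nested p s u v : Rmin p s <= u <= Rmax p s -> Rmin p u <= v <= Rmax p u ->
  Rmin p s <= v <= Rmax p s /\ Rabs (v - p) <= Rabs (s - p).
Proof.
  unfold Rmin, Rmax; destruct (Rle_dec p s), (Rle_dec p u); intros Hu Hv;
    split; try split_Rabs; lra.
Qed.

Lemma contact_bound F G p s M : smooth F -> smooth G ->
  F p = G p -> Derive F p = Derive G p ->
  (forall u, Rmin p s <= u <= Rmax p s -> Rabs (Derive_n F 2 u - Derive_n G 2 u) <= M) ->
  Rabs (Derive F s - Derive G s) <= M * Rabs (s - p) /\
  Rabs (F s - G s) <= M * (s - p) ^ 2.
Proof.
  intros HF HG E0 E1 HM.
  set (dh := fun u => Derive F u - Derive G u).
  assert (Ddh : forall u, ex_derive dh u /\ Derive dh u = Derive_n F 2 u - Derive_n G 2 u).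
  { intros u; pose proof (smooth_Derive _ HF) as HF'; pose proof (smooth_Derive _ HG) as HG'.
    split; [apply (ex_derive_minus (Derive F) (Derive G)); apply smooth_ex_derive; assumption|].
    apply Derive_minus; apply smooth_ex_derive; assumption. }
  assert (Bdh : forall u, Rmin p s <= u <= Rmax p s -> Rabs (dh u) <= M * Rabs (s - p)).
  { intros u Hu.
    replace (dh u) with (dh u - dh p) by (unfold dh; rewrite E1; ring).
    apply Rle_trans with (M * Rabs (u - p)).
    - apply Derive_bound_abs; [intros; apply Ddh|].
      intros v Hv; rewrite (proj2 (Ddh v)); apply HM, (between_nested p s u v Hu Hv).
    - assert (0 <= M) by (specialize (HM p ltac:(unfold Rmin, Rmax; destruct Rle_dec; lra));
                          pose proof (Rabs_pos (Derive_n F 2 p - Derive_n G 2 p)); lra).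
      apply Rmult_le_compat_l; [lra|].
      apply (between_nested p s s u); [unfold Rmin, Rmax; destruct Rle_dec; lra|exact Hu]. }
  split; [apply Bdh; unfold Rmin, Rmax; destruct Rle_dec; lra|].
  replace (F s - G s) with ((F s - G s) - (F p - G p)) by (rewrite E0; ring).
  replace (M * (s - p) ^ 2) with (M * Rabs (s - p) * Rabs (s - p))
    by (rewrite <- (pow2_abs (s - p)); ring).
  apply (Derive_bound_abs (fun u => F u - G u)).
  - intros u; apply (ex_derive_minus F G); apply smooth_ex_derive; assumption.
  - intros u Hu; rewrite Derive_minus by (apply smooth_ex_derive; assumption).
    apply Bdh, Hu.
Qed.

Lemma contact_eq F G p s : smooth F -> smooth G ->
  F p = G p -> Derive F p = Derive G p ->
  (forall u, Rmin p s <= u <= Rmax p s -> Derive_n F 2 u = Derive_n G 2 u) ->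
  F s = G s /\ Derive F s = Derive G s.
Proof.
  intros HF HG E0 E1 E2.
  destruct (contact_bound F G p s 0 HF HG E0 E1) as [B1 B2].
  - intros u Hu; rewrite E2, Rminus_eq_0, Rabs_R0 by exact Hu; lra.
  - rewrite Rmult_0_l in B1, B2.
    split; apply Rminus_diag_uniq, Rabs_eq_0; apply Rle_antisym; auto using Rabs_pos.
Qed.

Lemma affine_of_Derive2_zero F p s : smooth F ->
  (forall u, Rmin p s <= u <= Rmax p s -> Derive_n F 2 u = 0) ->
  F s = F p + Derive F p * (s - p) /\ Derive F s = Derive F p.
Proof.
  intros HF HD.
  set (A := fun u => F p + Derive F p * (u - p)).
  assert (DA : forall u, is_derive A u (Derive F p)) by (intros; unfold A; auto_derive; auto; ring).
  assert (DA' : forall u, Derive A u = Derive F p) by (intros; apply is_derive_unique, DA).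
  assert (HA : smooth A).
  { apply (smooth_ext (fun u => Derive F p * u + (F p - Derive F p * p)));
      [intros; unfold A; ring|apply smooth_affine]. }
  destruct (contact_eq F A p s HF HA) as [E0 E1]; [unfold A; ring|rewrite DA'; reflexivity| |].
  - intros u Hu; rewrite HD by exact Hu; simpl.
    rewrite (Derive_ext _ (fun _ => Derive F p)) by exact DA'; symmetry; apply Derive_const.
  - rewrite E1, DA'; split; [exact E0|reflexivity].
Qed.

Definition ode2_sol (k : R -> R) (p a b s : R) : R :=
  a + b * (s - p) + integral_from (integral_from k p) p s.

Lemma ode2_sol_spec k p a b : smooth k ->
  smooth (ode2_sol k p a b) /\ ode2_sol k p a b p = a /\
  Derive (ode2_sol k p a b) p = b /\ forall s, Derive_n (ode2_sol k p a b) 2 s = k s.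
Proof.
  intros Hk; pose proof (smooth_integral_from k p Hk) as HK.
  assert (D1 : forall s, is_derive (ode2_sol k p a b) s (b + integral_from k p s)).
  { intros s; unfold ode2_sol.
    apply (is_derive_plus (fun s => a + b * (s - p))); [auto_derive; auto; ring|].
    apply is_derive_integral_from, HK. }
  assert (E1 : forall s, Derive (ode2_sol k p a b) s = b + integral_from k p s)
    by (intros; apply is_derive_unique, D1).
  split; [|split; [|split]].
  - apply (smooth_ext (fun s => (b * s + (a - b * p)) + integral_from (integral_from k p) p s));
      [intros; unfold ode2_sol; ring|].
    apply smooth_plus; [apply smooth_affine|apply smooth_integral_from, HK].
  - unfold ode2_sol; rewrite integral_from_at; ring.
  - rewrite E1, integral_from_at; ring.
  - intros s; simpl; rewrite (Derive_ext _ _ _ E1).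
    apply is_derive_unique; rewrite <- Rplus_0_l.
    apply (is_derive_plus (fun _ => b)); [auto_derive; auto|apply is_derive_integral_from, Hk].
Qed.

Lemma smooth_glue g h b T : b < T -> smooth g -> smooth h ->
  (forall s, b < s < T -> g s = h s) ->
  exists f, smooth f /\ (forall s, s < T -> locally s (fun y => g y = f y)) /\
    (forall s, b < s -> locally s (fun y => h y = f y)).
Proof.
  intros HbT Hg Hh E.
  set (f := fun s => if Rle_dec s b then g s else h s).
  assert (FL : forall s, s < T -> locally s (fun y => g y = f y)).
  { intros s Hs; exists (mkposreal (T - s) ltac:(lra)); intros y Hy.
    apply Rabs_lt_between' in Hy; simpl in Hy.
    unfold f; destruct (Rle_dec y b); [reflexivity|apply E; lra]. }
  assert (FR : forall s, b < s -> locally s (fun y => h y = f y)).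
  { intros s Hs; exists (mkposreal (s - b) ltac:(lra)); intros y Hy.
    apply Rabs_lt_between' in Hy; simpl in Hy.
    unfold f; destruct (Rle_dec y b); [lra|reflexivity]. }
  exists f; split; [|split; assumption].
  intros n s; destruct (Rlt_le_dec s T) as [Hs|Hs].
  - exact (ex_derive_n_ext_loc g f n s (FL s Hs) (Hg n s)).
  - exact (ex_derive_n_ext_loc h f n s (FR s ltac:(lra)) (Hh n s)).
Qed.

(** * Choosing small parameters *)

Lemma continuous_eps f s : continuous f s ->
  forall e, 0 < e -> exists d, 0 < d /\ forall y, Rabs (y - s) < d -> Rabs (f y - f s) < e.
Proof.
  intros Hc e He; apply continuity_pt_filterlim in Hc.
  destruct (proj1 (continuity_pt_locally f s) Hc (mkposreal e He)) as [d Hd].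
  exists d; split; [apply cond_pos|intros y Hy; apply Hd, Hy].
Qed.

Lemma at_right0_exists (P : R -> Prop) : at_right 0 P -> exists w, 0 < w /\ P w.
Proof.
  intros [e He]; exists (e / 2); split; [pose proof (cond_pos e); lra|].
  apply He; [|pose proof (cond_pos e); lra].
  change (Rabs (e / 2 - 0) < e); rewrite Rminus_0_r, Rabs_pos_eq; pose proof (cond_pos e); lra.
Qed.

Lemma at_right0_pos : at_right 0 (fun w => 0 < w).
Proof. exists (mkposreal 1 Rlt_0_1); intros; assumption. Qed.

Lemma at_right0_le c : 0 < c -> at_right 0 (fun w => w <= c).
Proof.
  intros Hc; exists (mkposreal c Hc); intros w Hw _.
  change (Rabs (w - 0) < c) in Hw; apply Rabs_lt_between' in Hw; lra.
Qed.

Lemma at_right0_mult_le M e : 0 < e -> at_right 0 (fun w => M * w <= e).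
Proof.
  intros He; apply (filter_imp (fun w => 0 < w /\ w <= e / (Rabs M + 1))).
  - intros w [Hw Hwe]; pose proof (Rabs_pos M).
    apply Rmult_le_compat_r with (r := Rabs M + 1) in Hwe; [|lra].
    replace (e / (Rabs M + 1) * (Rabs M + 1)) with e in Hwe by (field; lra).
    pose proof (Rle_abs M); nra.
  - apply filter_and; [exact at_right0_pos|].
    apply at_right0_le, Rdiv_lt_0_compat; pose proof (Rabs_pos M); lra.
Qed.

Lemma at_right0_continuous g p e : continuous g p -> 0 < e ->
  at_right 0 (fun w => forall s, Rabs (s - p) <= w -> Rabs (g s - g p) < e).
Proof.
  intros Hg He; destruct (continuous_eps g p Hg e He) as [d [Hd Hc]].
  apply (filter_imp (fun w => w <= d / 2)); [|apply at_right0_le; lra].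
  intros w Hw s Hs; apply Hc; lra.
Qed.

Lemma at_right0_jet f p e : smooth f -> 0 < e ->
  at_right 0 (fun w => forall s, Rabs (s - p) <= w ->
    Rabs (f s - f p) < e /\ Rabs (Derive f s - Derive f p) < e /\
    Rabs (Derive_n f 2 s - Derive_n f 2 p) < e).
Proof.
  intros Hf He.
  apply (filter_imp (fun w =>
    (forall s, Rabs (s - p) <= w -> Rabs (f s - f p) < e) /\
    (forall s, Rabs (s - p) <= w -> Rabs (Derive f s - Derive f p) < e) /\
    (forall s, Rabs (s - p) <= w -> Rabs (Derive_n f 2 s - Derive_n f 2 p) < e)));
    [intros w (J0 & J1 & J2) s Hs; auto|].
  repeat apply filter_and; apply at_right0_continuous; try exact He;
    apply smooth_continuous; auto using smooth_Derive, smooth_Derive2.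
Qed.

Lemma abs_mult_sub_le a b a0 b0 d : Rabs (a - a0) <= d -> Rabs (b - b0) <= d -> d <= 1 ->
  Rabs (a * b - a0 * b0) <= d * (Rabs a0 + Rabs b0 + 1).
Proof.
  intros Ha Hb Hd.
  replace (a * b - a0 * b0) with ((a - a0) * b + a0 * (b - b0)) by ring.
  eapply Rle_trans; [apply Rabs_triang|rewrite !Rabs_mult].
  assert (Rabs b <= Rabs b0 + 1).
  { pose proof (Rabs_triang (b - b0) b0) as T; replace (b - b0 + b0) with b in T by ring; lra. }
  assert (Rabs (a - a0) * Rabs b <= d * (Rabs b0 + 1))
    by (apply Rmult_le_compat; auto using Rabs_pos).
  assert (Rabs a0 * Rabs (b - b0) <= Rabs a0 * d)
    by (apply Rmult_le_compat_l; auto using Rabs_pos).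
  lra.
Qed.

Lemma abs_le_of_between p q v B : Rabs p <= B -> Rabs q <= B -> Rmin p q <= v <= Rmax p q ->
  Rabs v <= B.
Proof.
  intros Hp Hq; apply Rabs_le_between in Hp; apply Rabs_le_between in Hq.
  unfold Rmin, Rmax; destruct Rle_dec; intros Hv; apply Rabs_le_between; lra.
Qed.

Lemma sq_le_of_between p q v B : p ^ 2 <= B -> q ^ 2 <= B -> Rmin p q <= v <= Rmax p q ->
  v ^ 2 <= B.
Proof. unfold Rmin, Rmax; destruct Rle_dec; intros Hp Hq Hv; destruct (Rle_dec 0 v); nra. Qed.

(** * A smooth step function *)

Inductive is_poly : (R -> R) -> Prop :=
  | is_poly_const c : is_poly (fun _ => c)
  | is_poly_id : is_poly (fun u => u)
  | is_poly_plus p q : is_poly p -> is_poly q -> is_poly (fun u => p u + q u)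
  | is_poly_mult p q : is_poly p -> is_poly q -> is_poly (fun u => p u * q u).

Lemma is_poly_derive p : is_poly p -> exists p', is_poly p' /\ forall u, is_derive p u (p' u).
Proof.
  induction 1 as [c| |p q _ [p' [Hp Dp]] _ [q' [Hq Dq]]|p q Hp0 [p' [Hp Dp]] Hq0 [q' [Hq Dq]]].
  - exists (fun _ => 0); split; [constructor|intros; auto_derive; auto].
  - exists (fun _ => 1); split; [constructor|intros; auto_derive; auto].
  - exists (fun u => p' u + q' u); split; [now constructor|].
    intros u; apply (is_derive_plus p q); auto.
  - exists (fun u => p' u * q u + p u * q' u); split; [repeat constructor; auto|].
    intros u; apply (is_derive_mult p q); auto; intros; apply Rmult_comm.
Qed.

Lemma is_poly_growth p : is_poly p ->
  exists C N, 0 <= C /\ forall u, 0 <= u -> Rabs (p u) <= C * (1 + u) ^ N.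
Proof.
  induction 1 as [c| |p q _ [C1 [N1 [HC1 B1]]] _ [C2 [N2 [HC2 B2]]]
                 |p q _ [C1 [N1 [HC1 B1]]] _ [C2 [N2 [HC2 B2]]]].
  - exists (Rabs c), 0%nat; split; [apply Rabs_pos|intros; simpl; lra].
  - exists 1, 1%nat; split; [lra|intros u Hu; rewrite Rabs_pos_eq by lra; simpl; lra].
  - exists (C1 + C2), (N1 + N2)%nat; split; [lra|intros u Hu].
    assert ((1 + u) ^ N1 <= (1 + u) ^ (N1 + N2)) by (apply Rle_pow; [lra|lia]).
    assert ((1 + u) ^ N2 <= (1 + u) ^ (N1 + N2)) by (apply Rle_pow; [lra|lia]).
    specialize (B1 u Hu); specialize (B2 u Hu).
    eapply Rle_trans; [apply Rabs_triang|nra].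
  - exists (C1 * C2), (N1 + N2)%nat; split; [nra|intros u Hu].
    rewrite Rabs_mult.
    replace (C1 * C2 * (1 + u) ^ (N1 + N2)) with ((C1 * (1 + u) ^ N1) * (C2 * (1 + u) ^ N2))
      by (rewrite pow_add; ring).
    apply Rmult_le_compat; auto using Rabs_pos.
Qed.

Lemma exp_pow_nat (m : nat) y : exp y ^ m = exp (INR m * y).
Proof.
  induction m as [|m IH]; [simpl; rewrite Rmult_0_l, exp_0; reflexivity|].
  rewrite S_INR, Rmult_plus_distr_r, Rmult_1_l, exp_plus, <- IH; simpl; ring.
Qed.

Lemma pow_le_exp (m : nat) u : (1 <= m)%nat -> 0 <= u -> ((1 + u) / INR m) ^ m <= exp u.
Proof.
  intros Hm Hu; assert (HM : 1 <= INR m) by (apply (le_INR 1); lia).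
  replace u with (INR m * (u / INR m)) at 2 by (field; lra).
  rewrite <- exp_pow_nat; apply pow_incr; split; [apply Rdiv_le_0_compat; lra|].
  apply Rle_trans with (1 + u / INR m); [|apply exp_ineq1_le].
  unfold Rdiv; rewrite Rmult_plus_distr_r.
  assert (/ INR m <= 1) by (rewrite <- Rinv_1; apply Rinv_le_contravar; lra); lra.
Qed.

(* With [u = 1/h]: [|q u| e^(-u) <= K / (1 + u)^2 <= K h^2], using [e^u >= ((1 + u)/m)^m]
   for [m] two more than the growth degree of [q]. *)
Lemma poly_exp_decay q : is_poly q -> forall e, 0 < e ->
  exists d, 0 < d /\ forall h, 0 < h < d -> Rabs (q (/ h) * exp (- / h)) <= e * h.
Proof.
  intros Hq e He; destruct (is_poly_growth q Hq) as [C [N [HC B]]].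
  set (m := (N + 2)%nat); set (K := C * INR m ^ m).
  assert (Hm : 1 <= INR m) by (apply (le_INR 1); unfold m; lia).
  assert (HK : 0 <= K) by (apply Rmult_le_pos; [|apply pow_le]; lra).
  exists (e / (K + 1)); split; [apply Rdiv_lt_0_compat; lra|intros h [Hh Hhd]].
  set (u := / h); assert (Hu : 0 < u) by (apply Rinv_0_lt_compat; lra).
  assert (Hh' : h = / u) by (unfold u; rewrite Rinv_inv; reflexivity).
  assert (Hpow : 0 < ((1 + u) / INR m) ^ m) by (apply pow_lt, Rdiv_lt_0_compat; lra).
  assert (Bound : Rabs (q u * exp (- u)) <= K / (1 + u) ^ 2).
  { rewrite Rabs_mult, exp_Ropp, (Rabs_pos_eq (/ exp u))
      by (left; apply Rinv_0_lt_compat, exp_pos).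
    apply Rle_trans with (C * (1 + u) ^ N * / ((1 + u) / INR m) ^ m).
    - apply Rmult_le_compat; [apply Rabs_pos|left; apply Rinv_0_lt_compat, exp_pos|apply B; lra|].
      apply Rinv_le_contravar; [exact Hpow|apply pow_le_exp; [unfold m; lia|lra]].
    - right; unfold K, m, Rdiv; rewrite Rpow_mult_distr, pow_inv, pow_add.
      field; repeat split; try apply pow_nonzero; unfold m in Hm; lra. }
  eapply Rle_trans; [exact Bound|].
  assert (h * (K + 1) < e).
  { apply (Rmult_lt_compat_r (K + 1)) in Hhd; [|lra].
    unfold Rdiv in Hhd; rewrite Rmult_assoc, Rinv_l in Hhd by lra; lra. }
  apply Rle_trans with (K * h * h).
  - rewrite Hh'; unfold Rdiv; rewrite Rmult_assoc, <- Rinv_mult.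
    apply Rmult_le_compat_l; [exact HK|apply Rinv_le_contravar; nra].
  - assert (0 <= K * h * h <= e * h); [split; nra|lra].
Qed.

Definition flat (q : R -> R) (s : R) : R :=
  if Rlt_dec 0 s then q (/ s) * exp (- / s) else 0.

Lemma is_derive_flat q : is_poly q ->
  exists q', is_poly q' /\ forall s, is_derive (flat q) s (flat q' s).
Proof.
  intros Hq; destruct (is_poly_derive q Hq) as [q' [Hq' Dq']].
  exists (fun u => u * u * (q u + -1 * q' u)); split; [repeat constructor; auto|].
  intros s; destruct (Rtotal_order s 0) as [Hs|[->|Hs]].
  - unfold flat at 2; destruct (Rlt_dec 0 s); [lra|].
    apply (is_derive_ext_loc (fun _ => 0)); [|auto_derive; auto].
    exists (mkposreal (- s) ltac:(lra)); intros y Hy.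
    apply Rabs_lt_between' in Hy; simpl in Hy.
    unfold flat; destruct (Rlt_dec 0 y); [lra|reflexivity].
  - unfold flat at 2; destruct (Rlt_dec 0 0); [lra|].
    apply is_derive_Reals; intros eps Heps.
    destruct (poly_exp_decay q Hq (eps / 2)) as [d [Hd Hdec]]; [lra|].
    exists (mkposreal d Hd); intros h Hh0 Hhd; simpl in Hhd.
    rewrite Rplus_0_l; unfold flat; destruct (Rlt_dec 0 0); [lra|].
    destruct (Rlt_dec 0 h) as [Hh|Hh].
    + rewrite Rabs_pos_eq in Hhd by lra.
      specialize (Hdec h (conj Hh Hhd)).
      rewrite !Rminus_0_r; unfold Rdiv; rewrite Rabs_mult.
      rewrite (Rabs_pos_eq (/ h)) by (left; apply Rinv_0_lt_compat; lra).
      apply Rle_lt_trans with (eps / 2 * h * / h).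
      * apply Rmult_le_compat_r; [left; apply Rinv_0_lt_compat; lra|exact Hdec].
      * field_simplify; lra.
    + replace ((0 - 0) / h - 0) with 0 by (field; lra); rewrite Rabs_R0; lra.
  - unfold flat at 2; destruct (Rlt_dec 0 s); [|lra].
    apply (is_derive_ext_loc (fun y => q (/ y) * exp (- / y))).
    { exists (mkposreal s Hs); intros y Hy.
      apply Rabs_lt_between' in Hy; simpl in Hy.
      unfold flat; destruct (Rlt_dec 0 y); [reflexivity|lra]. }
    replace (s * s * (q s + -1 * q' s)) with (s * s * q s - s * s * q' s) by ring.
    assert (D : is_derive (fun y => q (/ y)) s (- (/ s * / s) * q' (/ s))).
    { apply (is_derive_comp q (fun y => / y)); [apply Dq'|auto_derive; [lra|field; lra]]. }
    replace (/ s * / s * (q (/ s) + -1 * q' (/ s)) * exp (- / s)) with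
      ((- (/ s * / s) * q' (/ s)) * exp (- / s) + q (/ s) * (exp (- / s) * (/ s * / s))) by ring.
    apply (is_derive_mult (fun y => q (/ y)) (fun y => exp (- / y))); [exact D| |].
    + auto_derive; [lra|field; lra].
    + intros; apply Rmult_comm.
Qed.

Lemma smooth_flat q : is_poly q -> smooth (flat q).
Proof.
  intros Hq; apply (smooth_of_Derive_closed (fun g => exists q, is_poly q /\ g = flat q)); [|eauto].
  intros g [q0 [Hq0 ->]]; destruct (is_derive_flat q0 Hq0) as [q1 [Hq1 D]].
  split; [intros s; eexists; apply D|].
  exists q1; split; [exact Hq1|].
  apply functional_extensionality; intros s; apply is_derive_unique, D.
Qed.

Lemma flat_one_nonpos s : s <= 0 -> flat (fun _ => 1) s = 0.
Proof. intros Hs; unfold flat; destruct (Rlt_dec 0 s); [lra|reflexivity]. Qed.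

Lemma flat_one_pos s : 0 < s -> 0 < flat (fun _ => 1) s.
Proof. intros Hs; unfold flat; destruct (Rlt_dec 0 s); [rewrite Rmult_1_l; apply exp_pos|lra]. Qed.

Definition bump (s : R) : R := flat (fun _ => 1) s * flat (fun _ => 1) (1 - s).

Lemma smooth_bump : smooth bump.
Proof.
  apply smooth_mult; [apply smooth_flat; constructor|].
  apply (smooth_ext (fun s => flat (fun _ => 1) (-1 * s + 1))); [intros; f_equal; ring|].
  apply smooth_comp_affine, smooth_flat; constructor.
Qed.

Lemma bump_out s : s <= 0 \/ 1 <= s -> bump s = 0.
Proof.
  unfold bump; intros [Hs|Hs];
    [rewrite flat_one_nonpos by lra|rewrite (flat_one_nonpos (1 - s)) by lra]; ring.
Qed.

Lemma bump_pos s : 0 < s < 1 -> 0 < bump s.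
Proof. intros Hs; apply Rmult_lt_0_compat; apply flat_one_pos; lra. Qed.

Lemma bump_nonneg s : 0 <= bump s.
Proof.
  destruct (Rlt_le_dec 0 s), (Rlt_le_dec s 1);
    try (left; apply bump_pos; lra); rewrite bump_out by lra; lra.
Qed.

Definition smooth_step (H : R -> R) : Prop :=
  smooth H /\ (forall s, s <= 0 -> H s = 0) /\ (forall s, 1 <= s -> H s = 1) /\
  (forall s s', s <= s' -> H s <= H s') /\ 0 < H (1 / 2).

Lemma smooth_step_exists : exists H, smooth_step H.
Proof.
  set (P := integral_from bump 0).
  assert (EP : forall s, ex_derive P s)
    by (intros s; eexists; apply is_derive_integral_from, smooth_bump).
  assert (DP : forall s, Derive P s = bump s)
    by (intros; apply is_derive_unique, is_derive_integral_from, smooth_bump).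
  assert (Mono : forall a b, a <= b -> P a <= P b).
  { intros a b Hab; apply incr_of_Derive_nonneg; auto; intros; rewrite DP; apply bump_nonneg. }
  assert (Z0 : forall s, s <= 0 -> P s = P 0).
  { intros s Hs; apply eq_of_Derive_zero; [exact EP|intros u Hu; rewrite DP; apply bump_out].
    rewrite Rmin_left, Rmax_right in Hu by lra; lra. }
  assert (Z1 : forall s, 1 <= s -> P s = P 1).
  { intros s Hs; apply eq_of_Derive_zero; [exact EP|intros u Hu; rewrite DP; apply bump_out].
    rewrite Rmin_right, Rmax_left in Hu by lra; lra. }
  assert (Pos : P 0 < P (1 / 2)).
  { destruct (MVT_Derive P (1 / 4) (1 / 2) EP) as [c [Hc E]].
    rewrite Rmin_left, Rmax_right in Hc by lra; rewrite DP in E.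
    pose proof (bump_pos c ltac:(lra)); assert (P 0 <= P (1 / 4)) by (apply Mono; lra); nra. }
  assert (P (1 / 2) <= P 1) by (apply Mono; lra).
  exists (fun s => (P s - P 0) / (P 1 - P 0)); repeat split.
  - apply (smooth_ext (fun s => / (P 1 - P 0) * (P s + -1 * P 0))); [intros; unfold Rdiv; ring|].
    apply smooth_scal, smooth_plus; [apply smooth_integral_from, smooth_bump|apply smooth_const].
  - intros s Hs; rewrite Z0 by exact Hs; unfold Rdiv; ring.
  - intros s Hs; rewrite Z1 by exact Hs; field; lra.
  - intros s s' Hss'; apply Rmult_le_compat_r; [left; apply Rinv_0_lt_compat; lra|].
    apply Mono in Hss'; lra.
  - apply Rdiv_lt_0_compat; lra.
Qed.

Definition ramp (H : R -> R) (a w s : R) : R := H ((s - a) / w).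

Section Ramp.

Variables (H : R -> R) (a w : R).
Hypotheses (HH : smooth_step H) (Hw : 0 < w).

Lemma smooth_ramp : smooth (ramp H a w).
Proof.
  apply (smooth_ext (fun s => H (/ w * s + - a / w))); [intros; unfold ramp; f_equal; field; lra|].
  apply smooth_comp_affine, HH.
Qed.

Lemma ramp_incr s s' : s <= s' -> ramp H a w s <= ramp H a w s'.
Proof.
  intros Hss'; apply HH; unfold Rdiv; apply Rmult_le_compat_r; [left; apply Rinv_0_lt_compat|]; lra.
Qed.

Lemma ramp_left s : s <= a -> ramp H a w s = 0.
Proof.
  intros Hs; apply HH; replace ((s - a) / w) with (- ((a - s) / w)) by (field; lra).
  assert (0 <= (a - s) / w) by (apply Rdiv_le_0_compat; lra); lra.
Qed.

Lemma ramp_right s : a + w <= s -> ramp H a w s = 1.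
Proof. intros Hs; apply HH; apply Rle_div_r; lra. Qed.

Lemma ramp_bounds s : 0 <= ramp H a w s <= 1.
Proof.
  split.
  - rewrite <- (ramp_left (Rmin s a)) by apply Rmin_r; apply ramp_incr, Rmin_l.
  - rewrite <- (ramp_right (Rmax s (a + w))) by apply Rmax_r; apply ramp_incr, Rmax_l.
Qed.

Lemma ramp_mid s : a + w / 2 <= s -> H (1 / 2) <= ramp H a w s.
Proof.
  intros Hs; apply HH; replace ((s - a) / w) with (1 / 2 + (s - a - w / 2) / w) by (field; lra).
  assert (0 <= (s - a - w / 2) / w) by (apply Rdiv_le_0_compat; lra); lra.
Qed.

End Ramp.

(** * The energy density *)

Lemma G_continuous x r : C1_pos x -> 0 < r -> continuous (G x) r.
Proof.
  intros Hx Hr; destruct (Hx r Hr) as [Hd Hc].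
  assert (Cx : continuous x r) by (apply (@ex_derive_continuous R_AbsRing R_NormedModule); auto).
  assert (Cmult : forall f g : R -> R, continuous f r -> continuous g r ->
            continuous (fun y => f y * g y) r)
    by (intros; apply (@continuous_mult R_UniformSpace R_AbsRing); auto).
  assert (Cconst : forall c, continuous (fun _ : R => c) r)
    by (intros; apply (@continuous_const R_UniformSpace R_UniformSpace)).
  apply (@continuous_plus R_UniformSpace R_AbsRing R_NormedModule (fun y => x y ^ 2));
    [simpl; apply Cmult; [exact Cx|apply Cmult; [exact Cx|apply Cconst]]|].
  apply Cmult; [|apply (@continuous_id R_UniformSpace)].
  apply Cmult; [apply Cmult; [apply Cconst|exact Cx]|exact Hc].
Qed.

Lemma G_lower_near x r e : C1_pos x -> 0 < r -> 0 < e ->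
  exists d, 0 < d /\ forall r', Rabs (r' - r) < d -> G x r - e < G x r'.
Proof.
  intros Hx Hr He; destruct (continuous_eps _ _ (G_continuous x r Hx Hr) e He) as [d [Hd Hc]].
  exists d; split; [exact Hd|intros r' Hr'; specialize (Hc r' Hr')].
  apply Rabs_lt_between' in Hc; lra.
Qed.

Definition mu_num (x : R -> R) (r v k : R) : R := 1 - v ^ 2 + G x r - 2 * r * k.

Definition admissible (x f : R -> R) (s : R) : Prop :=
  0 < f s /\ 0 < mu_num x (f s) (Derive f s) (Derive_n f 2 s).

Lemma mu_eq x f s : mu x f s = mu_num x (f s) (Derive f s) (Derive_n f 2 s) / f s ^ 2.
Proof. unfold mu, mu_num, G; simpl; unfold Rdiv; f_equal; ring. Qed.

Lemma mu_pos_of_admissible x f s : admissible x f s -> 0 < mu x f s.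
Proof. intros [Hf Hm]; rewrite mu_eq; apply Rdiv_lt_0_compat, pow_lt; assumption. Qed.

Lemma admissible_of_mu_pos x f s : 0 < f s -> 0 < mu x f s -> admissible x f s.
Proof.
  intros Hf Hm; split; [exact Hf|rewrite mu_eq in Hm].
  assert (0 < f s ^ 2) by (apply pow_lt, Hf).
  replace (mu_num _ _ _ _) with (mu_num x (f s) (Derive f s) (Derive_n f 2 s) / f s ^ 2 * f s ^ 2)
    by (field; lra).
  apply Rmult_lt_0_compat; assumption.
Qed.

Lemma admissible_eq x f g s : f s = g s -> Derive f s = Derive g s ->
  Derive_n f 2 s = Derive_n g 2 s -> admissible x f s -> admissible x g s.
Proof. intros E0 E1 E2; unfold admissible; rewrite E0, E1, E2; exact (fun H => H). Qed.

Lemma admissible_ext_loc x f g s : locally s (fun y => f y = g y) ->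
  admissible x f s -> admissible x g s.
Proof.
  intros E; apply admissible_eq.
  - exact (locally_singleton _ _ E).
  - apply Derive_ext_loc, E.
  - apply Derive_n_ext_loc, E.
Qed.

Lemma admissible_shift x f t s : admissible x f (s - t) -> admissible x (fun y => f (y - t)) s.
Proof.
  unfold admissible.
  replace (Derive (fun y => f (y - t)) s) with (Derive f (s - t))
    by (symmetry; exact (Derive_n_comp_trans f 1 s (- t))).
  replace (Derive_n (fun y => f (y - t)) 2 s) with (Derive_n f 2 (s - t))
    by (symmetry; exact (Derive_n_comp_trans f 2 s (- t))).
  exact (fun H => H).
Qed.

Lemma mu_num_convex x r v k k' h : 0 <= h <= 1 ->
  0 < mu_num x r v k -> 0 < mu_num x r v k' -> 0 < mu_num x r v ((1 - h) * k + h * k').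
Proof.
  intros Hh Hk Hk'.
  replace (mu_num x r v ((1 - h) * k + h * k'))
    with ((1 - h) * mu_num x r v k + h * mu_num x r v k') by (unfold mu_num; ring).
  nra.
Qed.

Lemma mu_num_zero_curv_pos x r c : 0 <= c ->
  c < sqrt (1 + x r ^ 2 + 2 * x r * Derive x r * r) -> 0 < mu_num x r c 0.
Proof.
  intros Hc Hsq; rewrite <- (sqrt_pow2 c Hc) in Hsq; apply sqrt_lt_0_alt in Hsq.
  unfold mu_num, G; lra.
Qed.

Lemma mu_num_nbhd x r0 v0 k0 : C1_pos x -> 0 < r0 -> 0 < mu_num x r0 v0 k0 ->
  exists d, 0 < d /\ forall r v k, Rabs (r - r0) < d -> Rabs (v - v0) < d ->
    Rabs (k - k0) < d -> 0 < mu_num x r v k.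
Proof.
  intros Hx Hr0 HP; set (P0 := mu_num x r0 v0 k0) in *.
  destruct (continuous_eps _ _ (G_continuous x r0 Hx Hr0) (P0 / 2)) as [dG [HdG HG]]; [lra|].
  set (C := 2 * Rabs v0 + 2 * Rabs r0 + 2 * Rabs k0 + 3).
  destruct (at_right0_exists (fun d => d <= 1 /\ d <= dG /\ C * d <= P0 / 4))
    as [d [Hd (D1 & D2 & D3)]];
    [repeat apply filter_and; try apply at_right0_mult_le; try apply at_right0_le; lra|].
  exists d; split; [exact Hd|intros r v k Hr Hv Hk].
  pose proof (abs_mult_sub_le v v v0 v0 d ltac:(lra) ltac:(lra) D1) as Sq.
  pose proof (abs_mult_sub_le r k r0 k0 d ltac:(lra) ltac:(lra) D1) as Pr.
  pose proof (HG r ltac:(lra)) as Gr.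
  assert (E : P0 = 1 - v0 ^ 2 + G x r0 - 2 * r0 * k0) by reflexivity.
  apply Rabs_lt_between' in Gr; apply Rabs_le_between' in Sq, Pr.
  unfold mu_num, C in *; lra.
Qed.

(* The lower bound on [mu] is chosen so that the bending term costs at most [6 m / 25 < m / 4]. *)
Lemma mu_num_pos_of_small_slope x r y v mu j m : 0 < m -> 0 < r -> 0 < y <= 3 * r / 2 ->
  0 <= j <= 1 -> v ^ 2 <= 1 + G x r - m / 2 -> G x r - m / 4 < G x y ->
  - (2 * m / (25 * r)) <= mu ->
  0 < mu_num x y v (- (mu * j)).
Proof.
  intros Hm Hr Hy Hj Hv HG Hmu.
  assert (y * (mu * j) >= - (3 * m / 25)).
  { destruct (Rle_dec 0 mu) as [Hmu0|Hmu0]; [assert (0 <= mu * j) by nra; nra|].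
    assert (mu <= mu * j) by nra.
    assert (3 * r / 2 * mu <= y * mu) by nra.
    assert (3 * r / 2 * (- (2 * m / (25 * r))) <= 3 * r / 2 * mu)
      by (apply Rmult_le_compat_l; lra).
    replace (3 * r / 2 * (- (2 * m / (25 * r)))) with (- (3 * m / 25)) in * by (field; lra).
    nra. }
  unfold mu_num; lra.
Qed.

Lemma mu_num_pos_of_strong_bend x r y v mu j m V : 0 < r -> r / 2 <= y -> v ^ 2 <= V ^ 2 ->
  G x r - m / 4 < G x y -> 0 < m -> V ^ 2 + Rabs (G x r) + m + 2 <= r * (mu * j) ->
  0 < mu_num x y v (- (mu * j)).
Proof.
  intros Hr Hy Hv HG Hm Hmu.
  assert (0 <= mu * j).
  { destruct (Rle_dec 0 (mu * j)) as [|Hn]; [assumption|].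
    assert (r * (mu * j) <= 0) by nra.
    pose proof (pow2_ge_0 V); pose proof (Rabs_pos (G x r)); lra. }
  assert (r * (mu * j) <= 2 * y * (mu * j)) by nra.
  pose proof (Rle_abs (- G x r)); rewrite Rabs_Ropp in *.
  unfold mu_num; lra.
Qed.

Lemma mu_num_line_pos x r1 r2 c c' lo hi :
  (forall r r', r1 <= r -> r <= r' -> r' <= r2 -> G x r <= G x r') -> r1 <= r2 ->
  0 < mu_num x r1 c 0 -> c' ^ 2 <= c ^ 2 + mu_num x r1 c 0 / 4 ->
  (forall r, lo <= r <= r1 -> G x r1 - mu_num x r1 c 0 / 4 < G x r) ->
  (forall r, r2 <= r <= hi -> G x r2 - mu_num x r1 c 0 / 4 < G x r) ->
  forall r, lo <= r <= hi -> 0 < mu_num x r c' 0.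
Proof.
  intros HG H12 Hm Hc' Glo Ghi r Hr.
  assert (G x r1 <= G x r2) by (apply HG; lra).
  assert (G x r1 - mu_num x r1 c 0 / 4 < G x r).
  { destruct (Rle_lt_dec r r1); [apply Glo; lra|].
    destruct (Rle_lt_dec r r2); [pose proof (HG r1 r ltac:(lra) ltac:(lra) ltac:(lra)); lra|].
    pose proof (Ghi r ltac:(lra)); lra. }
  unfold mu_num in *; lra.
Qed.

(** * Flattening the left end *)

Lemma flatten_after f H p w : smooth f -> smooth_step H -> 0 < w ->
  exists L, smooth L /\
    (forall s, s <= p -> L s = f s /\ Derive L s = Derive f s /\ Derive_n L 2 s = Derive_n f 2 s) /\
    (forall s, p + w <= s -> Derive_n L 2 s = 0) /\
    (forall s, p <= s <= p + w ->
      exists h, 0 <= h <= 1 /\ Derive_n L 2 s = (1 - h) * Derive_n f 2 s) /\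
    (forall M, (forall u, p <= u <= p + w -> Rabs (Derive_n f 2 u) <= M) ->
      forall s, p <= s <= p + w ->
      Rabs (Derive L s - Derive f s) <= M * w /\ Rabs (L s - f s) <= M * w ^ 2).
Proof.
  intros Hf HH Hw; set (h := ramp H p w).
  destruct (ode2_sol_spec (fun s => (1 - h s) * Derive_n f 2 s) p (f p) (Derive f p))
    as [HL [L0 [L1 L2]]].
  { apply smooth_mult; [apply smooth_minus; [apply smooth_const|apply smooth_ramp; assumption]|].
    apply smooth_Derive2, Hf. }
  set (L := ode2_sol _ p (f p) (Derive f p)) in *.
  exists L; split; [exact HL|]; split; [|split; [|split]].
  - intros s Hs; destruct (contact_eq L f p s HL Hf L0 L1) as [E0 E1].
    { intros u Hu; rewrite Rmin_right, Rmax_left in Hu by lra.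
      rewrite L2, (ramp_left H p w) by (exact HH || exact Hw || lra); ring. }
    rewrite L2, (ramp_left H p w) by (exact HH || exact Hw || exact Hs).
    repeat split; [exact E0|exact E1|ring].
  - intros s Hs; rewrite L2, (ramp_right H p w) by (exact HH || exact Hw || exact Hs); ring.
  - intros s _; exists (h s); split; [apply ramp_bounds; assumption|apply L2].
  - intros M HM s Hs.
    assert (HM0 : 0 <= M)
      by (pose proof (Rabs_pos (Derive_n f 2 p)); pose proof (HM p ltac:(lra)); lra).
    destruct (contact_bound L f p s M HL Hf L0 L1) as [B1 B2].
    + intros u Hu; rewrite Rmin_left, Rmax_right in Hu by lra.
      rewrite L2; replace ((1 - h u) * Derive_n f 2 u - Derive_n f 2 u)
        with (- (h u * Derive_n f 2 u)) by ring.
      rewrite Rabs_Ropp, Rabs_mult, Rabs_pos_eq by (apply ramp_bounds; assumption).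
      assert (0 <= h u <= 1) by (apply ramp_bounds; assumption).
      pose proof (HM u ltac:(lra)); pose proof (Rabs_pos (Derive_n f 2 u)); nra.
    + rewrite (Rabs_pos_eq (s - p)) in B1 by lra; split.
      * eapply Rle_trans; [exact B1|apply Rmult_le_compat_l; lra].
      * eapply Rle_trans; [exact B2|apply Rmult_le_compat_l; [lra|apply pow_incr; lra]].
Qed.

Lemma flatten_near f b e : smooth f -> 0 < e -> e <= 1 ->
  at_right 0 (fun w => exists L, smooth L /\
    (forall s, s <= b - w ->
      L s = f s /\ Derive L s = Derive f s /\ Derive_n L 2 s = Derive_n f 2 s) /\
    (forall s, b <= s -> Derive_n L 2 s = 0) /\
    forall s, b - w <= s <= b ->
      (exists h, 0 <= h <= 1 /\ Derive_n L 2 s = (1 - h) * Derive_n f 2 s) /\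
      Rabs (L s - f b) < e /\ Rabs (Derive L s - Derive f b) < e /\
      Rabs (Derive_n f 2 s - Derive_n f 2 b) < e).
Proof.
  intros Hf He He1; destruct smooth_step_exists as [H HH]; set (k := Derive_n f 2 b).
  apply (filter_imp (fun w => 0 < w /\ w <= 1 /\ (Rabs k + 1) * w <= e / 2 /\
    forall s, Rabs (s - b) <= w -> Rabs (f s - f b) < e / 2 /\
      Rabs (Derive f s - Derive f b) < e / 2 /\ Rabs (Derive_n f 2 s - k) < e / 2)).
  2:{ repeat apply filter_and; [exact at_right0_pos|apply at_right0_le; lra
                              |apply at_right0_mult_le; lra|apply at_right0_jet; [exact Hf|lra]]. }
  intros w (Hw & W1 & WM & Wjet).
  destruct (flatten_after f H (b - w) w Hf HH Hw) as [L (HL & Lleft & Lright & Lmid & Lclose)].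
  replace (b - w + w) with b in * by ring.
  exists L; split; [exact HL|split; [exact Lleft|split; [exact Lright|]]].
  intros s Hs; split; [apply Lmid, Hs|].
  assert (Bd : forall u, b - w <= u <= b -> Rabs (Derive_n f 2 u) <= Rabs k + 1).
  { intros u Hu; destruct (Wjet u) as (_ & _ & J2); [apply Rabs_le_between'; lra|].
    pose proof (Rabs_triang_inv (Derive_n f 2 u) k); lra. }
  destruct (Lclose _ Bd s Hs) as [B1 B2].
  assert ((Rabs k + 1) * w ^ 2 <= (Rabs k + 1) * w)
    by (apply Rmult_le_compat_l; [pose proof (Rabs_pos k); lra|simpl; nra]).
  destruct (Wjet s) as (J0 & J1 & J2); [apply Rabs_le_between'; lra|].
  apply Rabs_le_between' in B1, B2; apply Rabs_lt_between' in J0, J1, J2.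
  repeat split; apply Rabs_lt_between'; lra.
Qed.

Lemma left_bend x f a b : a < b -> smooth f -> C1_pos x ->
  (forall s, a <= s <= b -> admissible x f s) ->
  0 < mu_num x (f b) (Derive f b) 0 ->
  forall delta, 0 < delta ->
  exists L, smooth L /\ (forall s, s <= (a + b) / 2 -> L s = f s) /\
    (forall s, b <= s -> Derive_n L 2 s = 0) /\
    Rabs (L b - f b) < delta /\ Rabs (Derive L b - Derive f b) < delta /\
    (forall s, a <= s <= b -> admissible x L s).
Proof.
  intros Hab Hf Hx Adm Hc0 delta Hdelta.
  assert (Hr : 0 < f b) by apply (Adm b ltac:(lra)).
  destruct (mu_num_nbhd x _ _ _ Hx Hr (proj2 (Adm b ltac:(lra)))) as [d1 [Hd1 N1]].
  destruct (mu_num_nbhd x _ _ _ Hx Hr Hc0) as [d0 [Hd0 N0]].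
  destruct (at_right0_exists (fun e => e <= delta /\ e <= f b /\ e <= d1 /\ e <= d0 /\ e <= 1))
    as [e [He (Ed & Er & E1 & E0 & Ee1)]]; [repeat apply filter_and; apply at_right0_le; lra|].
  assert (Hba : 0 < (b - a) / 2) by lra.
  destruct (at_right0_exists _ (filter_and _ _ (at_right0_le _ Hba) (flatten_near f b e Hf He Ee1)))
    as [w [Hw [Wab (L & HL & Lleft & Lright & Lwin)]]].
  destruct (Lwin b ltac:(lra)) as (_ & Nb & Nb' & _).
  exists L; refine (conj HL (conj _ (conj Lright (conj _ (conj _ _))))); [| lra | lra |].
  - intros s Hs; apply Lleft; lra.
  - intros s Hs; destruct (Rle_lt_dec s (b - w)) as [Hsw|Hsw].
    + destruct (Lleft s Hsw) as (E0' & E1' & E2').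
      apply (admissible_eq x f); auto; apply Adm; lra.
    + destruct (Lwin s ltac:(lra)) as ([h [Hh Lk]] & Nr & Nc & Nk).
      split; [apply Rabs_lt_between' in Nr; lra|].
      rewrite Lk; replace ((1 - h) * Derive_n f 2 s) with ((1 - h) * Derive_n f 2 s + h * 0)
        by ring.
      apply mu_num_convex; [exact Hh|apply N1; lra|].
      apply N0; [lra|lra|rewrite Rminus_0_r, Rabs_R0; lra].
Qed.

(** * Bending the right end *)

Module RightBend.

(* [profile mu] agrees with [f] right of [a], is affine left of [e = a - w - tau], and in
   between its curvature interpolates from [-mu] (switched on over [e, a - w]) to [f'']
   (switched on over [a - w, a]). *)
Section Profile.

Variables (f H P N : R -> R) (a w tau : R).
Hypotheses (Hf : smooth f) (HH : smooth_step H) (Hw : 0 < w) (Htau : 0 < tau).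

Let e := a - w - tau.

Hypotheses (HP : smooth P) (P0 : P a = f a) (P1 : Derive P a = Derive f a)
  (P2 : forall s, Derive_n P 2 s = ramp H (a - w) w s * Derive_n f 2 s).
Hypotheses (HN : smooth N) (N0 : N a = 0) (N1 : Derive N a = 0)
  (N2 : forall s, Derive_n N 2 s = - ((1 - ramp H (a - w) w s) * ramp H e tau s)).

Definition profile (mu s : R) : R := P s + mu * N s.

Lemma smooth_profile mu : smooth (profile mu).
Proof. apply smooth_plus; [exact HP|apply smooth_scal, HN]. Qed.

Lemma Derive_profile mu s : Derive (profile mu) s = Derive P s + mu * Derive N s.
Proof.
  unfold profile; rewrite Derive_plus, Derive_scal; auto using smooth_ex_derive.
  apply (ex_derive_scal N), smooth_ex_derive, HN.
Qed.

Lemma Derive2_profile mu s : Derive_n (profile mu) 2 s =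
  ramp H (a - w) w s * Derive_n f 2 s - mu * ((1 - ramp H (a - w) w s) * ramp H e tau s).
Proof.
  transitivity (Derive_n P 2 s + mu * Derive_n N 2 s); [|rewrite P2, N2; ring].
  simpl; rewrite (Derive_ext _ (fun s => Derive P s + mu * Derive N s)) by apply Derive_profile.
  rewrite Derive_plus, Derive_scal.
  - reflexivity.
  - apply smooth_ex_derive, smooth_Derive, HP.
  - apply (ex_derive_scal (Derive N)), smooth_ex_derive, smooth_Derive, HN.
Qed.

Lemma profile_after mu s : a <= s ->
  profile mu s = f s /\ Derive (profile mu) s = Derive f s /\
  Derive_n (profile mu) 2 s = Derive_n f 2 s.
Proof.
  assert (E2 : forall u, a <= u -> Derive_n (profile mu) 2 u = Derive_n f 2 u).
  { intros u Hu; rewrite Derive2_profile.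
    rewrite (ramp_right H (a - w) w) by (exact HH || exact Hw || lra); ring. }
  intros Hs; destruct (contact_eq (profile mu) f a s) as [E0 E1];
    auto using smooth_profile.
  - unfold profile; rewrite P0, N0; ring.
  - rewrite Derive_profile, P1, N1; ring.
  - intros u Hu; rewrite Rmin_left, Rmax_right in Hu by lra; apply E2; lra.
Qed.

Lemma profile_before mu s : s <= e -> Derive_n (profile mu) 2 s = 0.
Proof.
  intros Hs; rewrite Derive2_profile.
  rewrite (ramp_left H (a - w) w), (ramp_left H e tau)
    by (exact HH || exact Hw || exact Htau || unfold e in *; lra).
  ring.
Qed.

Lemma profile_bend_zone mu s : s <= a - w -> Derive_n (profile mu) 2 s = - mu * ramp H e tau s.
Proof.
  intros Hs; rewrite Derive2_profile.
  rewrite (ramp_left H (a - w) w) by (exact HH || exact Hw || lra); ring.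
Qed.

Lemma profile_flat_zone mu s : a - w <= s -> Derive_n (profile mu) 2 s =
  (1 - ramp H (a - w) w s) * - mu + ramp H (a - w) w s * Derive_n f 2 s.
Proof.
  intros Hs; rewrite Derive2_profile.
  rewrite (ramp_right H e tau) by (exact HH || exact Htau || unfold e; lra); ring.
Qed.

Lemma bend_slope_bounds : H (1 / 2) * tau / 2 <= Derive N e <= w + tau.
Proof.
  assert (EN : forall u, ex_derive (Derive N) u) by (intros; apply ex_derive_Derive, HN).
  assert (N2le : forall u, Derive (Derive N) u <= 0).
  { intros u; change (Derive_n N 2 u <= 0); rewrite N2.
    pose proof (ramp_bounds H (a - w) w HH Hw u); pose proof (ramp_bounds H e tau HH Htau u); nra. }
  assert (Decr : forall u v, u <= v -> Derive N v <= Derive N u)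
    by (intros; apply decr_of_Derive_nonpos; auto).
  split.
  - set (h0 := H (1 / 2)).
    assert (G : Derive N (a - w) + h0 * (a - w) <= Derive N (e + tau / 2) + h0 * (e + tau / 2)).
    { apply (decr_of_Derive_nonpos (fun u => Derive N u + h0 * u)); [| unfold e; lra|].
      - intros u; apply (ex_derive_plus (Derive N) (fun u => h0 * u)); [apply EN|].
        eexists; auto_derive; auto.
      - intros u Hu; rewrite Derive_plus, Derive_scal, Derive_id; [|apply EN|].
        + change (Derive_n N 2 u + h0 * 1 <= 0); rewrite N2;
          rewrite (ramp_left H (a - w) w) by (exact HH || exact Hw || lra).
          assert (h0 <= ramp H e tau u) by (apply ramp_mid; auto; unfold e in *; lra); lra.
        + eexists; auto_derive; auto. }
    pose proof (Decr (a - w) a ltac:(lra)); pose proof (Decr e (e + tau / 2) ltac:(lra)).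
    unfold e in *; lra.
  - assert (B : Rabs (Derive N a - Derive N e) <= 1 * Rabs (a - e)).
    { apply Derive_bound_abs; [exact EN|intros u _].
      change (Rabs (Derive_n N 2 u) <= 1); rewrite N2, Rabs_Ropp, Rabs_mult.
      pose proof (ramp_bounds H (a - w) w HH Hw u); pose proof (ramp_bounds H e tau HH Htau u).
      rewrite !Rabs_pos_eq by lra; nra. }
    rewrite N1, (Rabs_pos_eq (a - e)) in B by (unfold e; lra).
    apply Rabs_le_between' in B; unfold e in *; lra.
Qed.

Lemma flat_slope_close M : (forall u, a - w <= u <= a -> Rabs (Derive_n f 2 u) <= M) ->
  Rabs (Derive P e - Derive f a) <= M * w.
Proof.
  intros HM; assert (EP : forall u, ex_derive (Derive P) u) by (intros; apply ex_derive_Derive, HP).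
  replace (Derive P e) with (Derive P (a - w)).
  - rewrite <- P1, Rabs_minus_sym; replace w with (Rabs (a - (a - w))) at 2
      by (rewrite Rabs_pos_eq; lra).
    apply Derive_bound_abs; [exact EP|intros u Hu; rewrite Rmin_left, Rmax_right in Hu by lra].
    change (Rabs (Derive_n P 2 u) <= M); rewrite P2, Rabs_mult.
    pose proof (ramp_bounds H (a - w) w HH Hw u); pose proof (HM u Hu).
    pose proof (Rabs_pos (Derive_n f 2 u)).
    rewrite Rabs_pos_eq by lra; nra.
  - symmetry; apply eq_of_Derive_zero; [exact EP|intros u Hu].
    rewrite Rmin_left, Rmax_right in Hu by (unfold e; lra).
    change (Derive_n P 2 u = 0); rewrite P2;
    rewrite (ramp_left H (a - w) w) by (exact HH || exact Hw || lra); ring.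
Qed.

Lemma profile_bend_slope_between mu s : e <= s <= a - w ->
  Rmin (Derive (profile mu) e) (Derive (profile mu) (a - w)) <= Derive (profile mu) s <=
  Rmax (Derive (profile mu) e) (Derive (profile mu) (a - w)).
Proof.
  intros Hs; set (R' := Derive (profile mu)).
  assert (ER : forall u, ex_derive R' u) by (intros; apply ex_derive_Derive, smooth_profile).
  assert (D2 : forall u, e <= u <= a - w -> Derive R' u = - mu * ramp H e tau u)
    by (intros u Hu; apply (profile_bend_zone mu u); lra).
  destruct (Rle_dec 0 mu) as [Hmu|Hmu].
  - assert (Dle : forall u v, e <= u <= v -> v <= a - w -> R' v <= R' u).
    { intros u v Huv Hv; apply decr_of_Derive_nonpos; [exact ER|lra|intros z Hz].
      rewrite D2 by lra; pose proof (ramp_bounds H e tau HH Htau z); nra. }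
    pose proof (Dle e s ltac:(lra) ltac:(lra)); pose proof (Dle s (a - w) ltac:(lra) ltac:(lra)).
    unfold Rmin, Rmax; destruct Rle_dec; lra.
  - assert (Ile : forall u v, e <= u <= v -> v <= a - w -> R' u <= R' v).
    { intros u v Huv Hv; apply incr_of_Derive_nonneg; [exact ER|lra|intros z Hz].
      rewrite D2 by lra; pose proof (ramp_bounds H e tau HH Htau z); nra. }
    pose proof (Ile e s ltac:(lra) ltac:(lra)); pose proof (Ile s (a - w) ltac:(lra) ltac:(lra)).
    unfold Rmin, Rmax; destruct Rle_dec; lra.
Qed.

(* Since the bending weight is nondecreasing, on [e, s] the slope falls at rate at most
   [mu * ramp H e tau s]. *)
Lemma profile_bend_slope_drop mu s : 0 <= mu -> e <= s <= a - w ->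
  0 <= Derive (profile mu) e - Derive (profile mu) s <= mu * ramp H e tau s * tau.
Proof.
  intros Hmu Hs; set (R' := Derive (profile mu)).
  assert (ER : forall u, ex_derive R' u) by (intros; apply ex_derive_Derive, smooth_profile).
  assert (D2 : forall u, e <= u <= a - w -> Derive R' u = - mu * ramp H e tau u)
    by (intros u Hu; apply (profile_bend_zone mu u); lra).
  split.
  - assert (R' s <= R' e); [|lra].
    apply decr_of_Derive_nonpos; [exact ER|lra|intros z Hz].
    rewrite D2 by lra; pose proof (ramp_bounds H e tau HH Htau z); nra.
  - set (j := ramp H e tau s).
    assert (G : R' e + mu * j * e <= R' s + mu * j * s).
    { apply (incr_of_Derive_nonneg (fun u => R' u + mu * j * u)); [|lra|].
      - intros u; apply (ex_derive_plus R' (fun u => mu * j * u)); [apply ER|].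
        eexists; auto_derive; auto.
      - intros u Hu; rewrite Derive_plus, Derive_scal, Derive_id;
          [|apply ER|eexists; auto_derive; auto].
        rewrite D2 by lra.
        assert (ramp H e tau u <= j) by (apply ramp_incr; auto; lra).
        nra. }
    assert (0 <= mu * j) by (apply Rmult_le_pos; [lra|apply ramp_bounds; assumption]).
    assert (mu * j * (s - e) <= mu * j * tau) by (apply Rmult_le_compat_l; unfold e in *; lra).
    lra.
Qed.

Lemma profile_flat_zone_close mu M : (forall u, a - w <= u <= a -> Rabs (Derive_n f 2 u) <= M) ->
  forall s, a - w <= s <= a ->
  Rabs (Derive (profile mu) s - Derive f s) <= (M + Rabs mu) * w /\
  Rabs (profile mu s - f s) <= (M + Rabs mu) * w ^ 2.
Proof.
  intros HM s Hs.
  destruct (profile_after mu a (Rle_refl a)) as [E0 [E1 _]].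
  destruct (contact_bound (profile mu) f a s (M + Rabs mu)) as [B1 B2];
    auto using smooth_profile.
  - intros u Hu; rewrite Rmin_right, Rmax_left in Hu by lra.
    rewrite profile_flat_zone by lra.
    replace ((1 - ramp H (a - w) w u) * - mu + ramp H (a - w) w u * Derive_n f 2 u - Derive_n f 2 u)
      with (- ((1 - ramp H (a - w) w u) * (mu + Derive_n f 2 u))) by ring.
    rewrite Rabs_Ropp, Rabs_mult; pose proof (ramp_bounds H (a - w) w HH Hw u).
    rewrite (Rabs_pos_eq (1 - ramp H (a - w) w u)) by lra.
    pose proof (Rabs_triang mu (Derive_n f 2 u)); pose proof (HM u ltac:(lra)).
    pose proof (Rabs_pos (mu + Derive_n f 2 u)); nra.
  - assert (0 <= M + Rabs mu)
      by (pose proof (HM a ltac:(lra)); pose proof (Rabs_pos (Derive_n f 2 a));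
          pose proof (Rabs_pos mu); lra).
    rewrite (Rabs_minus_sym s a), (Rabs_pos_eq (a - s)) in B1 by lra.
    replace ((s - a) ^ 2) with ((a - s) ^ 2) in B2 by ring.
    split.
    + apply (Rle_trans _ _ _ B1). apply Rmult_le_compat_l; lra.
    + apply (Rle_trans _ _ _ B2); apply Rmult_le_compat_l; [lra|apply pow_incr; lra].
Qed.

End Profile.

Section Estimates.

Variables (x f H : R -> R) (a b c c' rho tau dR w : R).

Let r := f a.
Let d := Derive f a.
Let k := Derive_n f 2 a.
Let m := mu_num x r c 0.
Let V := c + Rabs d + 2.
Let h0 := H (1 / 2).
Let eps := h0 * tau * m / (50 * r).
Let e := a - w - tau.

(* Smallness conditions on the bending length [tau], the box [dR] around the jet of [f] at [a],
   and the cutoff length [w], in the order in which [right_bend] chooses them. *)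
Hypotheses (Hab : a < b) (Hf : smooth f) (Adm : forall s, a <= s <= b -> admissible x f s)
  (HH : smooth_step H) (Hc : 0 < c) (Hm : 0 < m) (Hdc : d <= c).
Hypotheses (Hrho : 0 < rho) (Hrho_r : rho <= r / 2)
  (HGr : forall r', Rabs (r' - r) < rho -> G x r - m / 4 < G x r').
Hypotheses (Htau : 0 < tau) (Htau_rho : 2 * V * tau < rho)
  (Htau_c : 2 * (V ^ 2 + Rabs (G x r) + m + 2) * tau <= c * r).
Hypotheses (Hc'_lo : c - eps <= c') (Hc'_half : c / 2 < c') (Hc'_hi : c' <= c + 1)
  (Hc'_sq : c' ^ 2 <= c ^ 2 + m / 4).
Hypotheses (HdR : 0 < dR) (HdR1 : dR <= 1) (HdR_m : dR * (2 * Rabs d + 1) <= m / 2)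
  (Hbox : forall r' v k', Rabs (r' - r) < dR -> Rabs (v - d) < dR -> Rabs (k' - k) < dR ->
     0 < mu_num x r' v k').
Hypotheses (Hw : 0 < w) (Hw_tau : w <= tau) (Hw1 : w <= 1)
  (Hw_eps : (Rabs k + 1) * w <= eps) (Hw_c : (Rabs k + 1) * w <= c / 2)
  (Hw_dR : (Rabs k + 1 + 4 * V / (h0 * tau)) * w <= dR / 4)
  (Hwin : forall s, Rabs (s - a) <= w -> Rabs (f s - r) < dR / 2 /\
     Rabs (Derive f s - d) < dR / 2 /\ Rabs (Derive_n f 2 s - k) < dR / 2).

Let P := ode2_sol (fun s => ramp H (a - w) w s * Derive_n f 2 s) a (f a) (Derive f a).
Let N := ode2_sol (fun s => - ((1 - ramp H (a - w) w s) * ramp H e tau s)) a 0 0.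
Let mu := (c' - Derive P e) / Derive N e.
Let F := profile P N mu.

Lemma flat_part_spec : smooth P /\ P a = f a /\ Derive P a = Derive f a /\
  forall s, Derive_n P 2 s = ramp H (a - w) w s * Derive_n f 2 s.
Proof.
  apply ode2_sol_spec, smooth_mult; [apply smooth_ramp; assumption|apply smooth_Derive2, Hf].
Qed.

Lemma bend_part_spec : smooth N /\ N a = 0 /\ Derive N a = 0 /\
  forall s, Derive_n N 2 s = - ((1 - ramp H (a - w) w s) * ramp H e tau s).
Proof.
  apply ode2_sol_spec.
  apply (smooth_ext (fun s => -1 * ((1 - ramp H (a - w) w s) * ramp H e tau s))); [intros; ring|].
  apply smooth_scal, smooth_mult; [apply smooth_minus; [apply smooth_const|]|];
    apply smooth_ramp; assumption.
Qed.

Lemma curv_bound u : a - w <= u <= a -> Rabs (Derive_n f 2 u) <= Rabs k + 1.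
Proof.
  intros Hu; destruct (Hwin u) as (_ & _ & Hk); [apply Rabs_le_between'; lra|].
  pose proof (Rabs_triang_inv (Derive_n f 2 u) k); lra.
Qed.

Local Ltac setup :=
  assert (r_pos : 0 < r) by (apply (Adm a); lra);
  assert (h0_pos : 0 < h0) by apply HH;
  assert (m_eq : m = 1 - c ^ 2 + G x r) by (unfold m, mu_num; ring);
  destruct flat_part_spec as (HP & P0 & P1 & P2);
  destruct bend_part_spec as (HN & N0 & N1 & N2);
  assert (S_bounds : h0 * tau / 2 <= Derive N e <= w + tau) by (eapply bend_slope_bounds; eauto);
  assert (vb_near : Rabs (Derive P e - d) <= (Rabs k + 1) * w)
    by (eapply flat_slope_close; eauto; apply curv_bound).

Lemma mu_times_slope : mu * Derive N e = c' - Derive P e.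
Proof.
  setup; assert (0 < h0 * tau) by (apply Rmult_lt_0_compat; lra).
  unfold mu; field; lra.
Qed.

Lemma slope_at_start : Derive F e = c'.
Proof. setup; unfold F; rewrite (Derive_profile P N HP HN), mu_times_slope; ring. Qed.

Lemma mu_ge : - (2 * m / (25 * r)) <= mu.
Proof.
  setup; pose proof mu_times_slope.
  apply Rabs_le_between' in vb_near.
  assert (Hht : 0 < h0 * tau) by (apply Rmult_lt_0_compat; lra).
  assert (0 < 2 * m / (25 * r)) by (apply Rdiv_lt_0_compat; lra).
  destruct (Rle_lt_dec 0 mu) as [|Hmu]; [lra|].
  assert (mu * Derive N e <= mu * (h0 * tau / 2)) by (apply Rmult_le_compat_neg_l; lra).
  assert (E : 2 * m / (25 * r) * (h0 * tau) = 4 * eps) by (unfold eps; field; lra).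
  assert (0 <= (mu + 2 * m / (25 * r)) * (h0 * tau)) by (rewrite Rmult_plus_distr_r, E; lra).
  nra.
Qed.

Lemma mu_abs_le : Rabs mu <= 4 * V / (h0 * tau).
Proof.
  setup; pose proof mu_times_slope.
  apply Rabs_le_between' in vb_near.
  assert (Hht : 0 < h0 * tau) by (apply Rmult_lt_0_compat; lra).
  apply Rle_div_r; [exact Hht|].
  assert (Rabs mu * (h0 * tau / 2) <= Rabs (c' - Derive P e)).
  { rewrite <- mu_times_slope, Rabs_mult, (Rabs_pos_eq (Derive N e)) by lra.
    apply Rmult_le_compat_l; [apply Rabs_pos|lra]. }
  assert (Rabs (c' - Derive P e) <= 2 * V).
  { apply Rabs_le_between'; pose proof (Rle_abs d); pose proof (Rle_abs (- d));
      rewrite Rabs_Ropp in *; unfold V; lra. }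
  lra.
Qed.

Lemma mu_large : d < - c -> V ^ 2 + Rabs (G x r) + m + 2 < r * mu.
Proof.
  intros Hd; setup; pose proof mu_times_slope; apply Rabs_le_between' in vb_near.
  assert (c < mu * Derive N e) by lra.
  assert (0 < mu).
  { destruct (Rle_lt_dec mu 0) as [Hmu|Hmu]; [|exact Hmu].
    apply Rmult_le_compat_r with (r := Derive N e) in Hmu; [rewrite Rmult_0_l in Hmu; lra|nra]. }
  assert (c < mu * (2 * tau)) by nra.
  nra.
Qed.

Lemma flat_zone_near s : a - w <= s <= a -> Rabs (F s - r) < dR /\ Rabs (Derive F s - d) < dR.
Proof.
  intros Hs; setup.
  destruct (profile_flat_zone_close f H P N a w tau Hf HH Hw Htau HP P0 P1 P2 HN N0 N1 N2
              mu (Rabs k + 1) curv_bound s Hs) as [B1 B2].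
  assert (HM : (Rabs k + 1 + Rabs mu) * w <= dR / 4).
  { eapply Rle_trans; [|exact Hw_dR]; apply Rmult_le_compat_r; [lra|].
    pose proof mu_abs_le; lra. }
  assert ((Rabs k + 1 + Rabs mu) * w ^ 2 <= (Rabs k + 1 + Rabs mu) * w).
  { apply Rmult_le_compat_l; [pose proof (Rabs_pos k); pose proof (Rabs_pos mu); lra|simpl; nra]. }
  destruct (Hwin s) as (Wf & Wf' & _); [apply Rabs_le_between'; lra|].
  apply Rabs_le_between' in B1, B2; apply Rabs_lt_between' in Wf, Wf'.
  split; apply Rabs_lt_between'; unfold F; lra.
Qed.

Lemma slope_bound s : e <= s <= a -> Rabs (Derive F s) <= V.
Proof.
  intros Hs; setup.
  assert (Flat : forall u, a - w <= u <= a -> Rabs (Derive F u) <= V).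
  { intros u Hu; destruct (flat_zone_near u Hu) as [_ Hv].
    pose proof (Rabs_triang_inv (Derive F u) d); unfold V; lra. }
  destruct (Rle_dec (a - w) s) as [Hsw|Hsw]; [apply Flat; lra|].
  apply (abs_le_of_between (Derive F e) (Derive F (a - w))).
  - rewrite slope_at_start, Rabs_pos_eq; unfold V; pose proof (Rabs_pos d); lra.
  - apply Flat; lra.
  - eapply profile_bend_slope_between; eauto; unfold e in *; lra.
Qed.

Lemma value_near s : e <= s <= a -> Rabs (F s - r) < rho.
Proof.
  intros Hs; setup.
  destruct (profile_after f H P N a w tau Hf HH Hw HP P0 P1 P2 HN N0 N1 N2 mu a (Rle_refl a))
    as [Ra _].
  assert (B : Rabs (F a - F s) <= V * Rabs (a - s)).
  { apply Derive_bound_abs; [intros; apply smooth_ex_derive, smooth_profile; assumption|].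
    intros u Hu; rewrite Rmin_left, Rmax_right in Hu by lra; apply slope_bound; lra. }
  fold F in Ra; replace (F a) with r in B by (rewrite Ra; reflexivity).
  rewrite Rabs_minus_sym, (Rabs_pos_eq (a - s)) in B by lra.
  assert (V * (a - s) <= V * (2 * tau)) by (apply Rmult_le_compat_l; unfold V, e in *;
    pose proof (Rabs_pos d); lra).
  lra.
Qed.

Lemma value_bounds s : e <= s <= a -> r / 2 < F s < 3 * r / 2 /\ G x r - m / 4 < G x (F s).
Proof.
  intros Hs; pose proof (value_near s Hs) as Hv; split; [|apply HGr, Hv].
  apply Rabs_lt_between' in Hv; lra.
Qed.

Lemma sq_slope_flat_zone s : a - w <= s <= a -> Derive F s ^ 2 <= d ^ 2 + m / 2.
Proof.
  intros Hs; destruct (flat_zone_near s Hs) as [_ Hv].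
  pose proof (abs_mult_sub_le _ _ d d dR (Rlt_le _ _ Hv) (Rlt_le _ _ Hv) HdR1) as B.
  apply Rabs_le_between in B; simpl; lra.
Qed.

Lemma admissible_flat_zone s : a - w <= s <= a -> admissible x F s.
Proof.
  intros Hs; setup.
  destruct (value_bounds s ltac:(unfold e; lra)) as [HR HG].
  destruct (flat_zone_near s Hs) as [Nr Nv].
  pose proof mu_ge; pose proof (slope_bound s ltac:(unfold e; lra)) as Sv.
  split; [lra|].
  unfold F; rewrite (profile_flat_zone f H P N a w tau HH Htau HP P2 HN N2 mu s) by lra; fold F.
  apply mu_num_convex; [apply ramp_bounds; assumption| |].
  - replace (- mu) with (- (mu * 1)) by ring.
    destruct (Rle_lt_dec (Derive F s ^ 2) (1 + G x r - m / 2)) as [Hv|Hv].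
    + apply (mu_num_pos_of_small_slope x r (F s) (Derive F s) mu 1 m); lra.
    + apply (mu_num_pos_of_strong_bend x r (F s) (Derive F s) mu 1 m V); try lra;
        [apply pow_maj_Rabs, Sv|rewrite Rmult_1_r; left; apply mu_large].
      pose proof (sq_slope_flat_zone s Hs).
      destruct (Rlt_le_dec d (- c)) as [|Hd]; [assumption|].
      assert (d ^ 2 <= c ^ 2) by nra; lra.
  - apply Hbox; [exact Nr|exact Nv|].
    destruct (Hwin s) as (_ & _ & Wk); [apply Rabs_le_between'; lra|lra].
Qed.

(* A negative [mu] would force [0 < d <= c], and then every slope between [c'] and
   [Derive F (a - w)] (approximately [d]) is too small in absolute value. *)
Lemma mu_nonneg_of_steep s : e <= s <= a - w -> 1 + G x r - m / 2 < Derive F s ^ 2 -> 0 <= mu.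
Proof.
  intros Hs Hv; setup; destruct (Rle_lt_dec 0 mu) as [|Hmu]; [assumption|exfalso].
  pose proof mu_times_slope.
  apply Rabs_le_between' in vb_near.
  assert (mu * Derive N e < 0) by (apply Rmult_neg_pos; [exact Hmu|nra]).
  assert (0 < d) by lra.
  assert (d ^ 2 <= c ^ 2) by nra.
  pose proof (sq_slope_flat_zone (a - w) ltac:(lra)).
  assert (Derive F s ^ 2 <= 1 + G x r - m / 2); [|lra].
  apply (sq_le_of_between (Derive F e) (Derive F (a - w))); [rewrite slope_at_start; lra|lra|].
  eapply profile_bend_slope_between; eauto; unfold e in *; lra.
Qed.

Lemma admissible_bend_zone s : e <= s <= a - w -> admissible x F s.
Proof.
  intros Hs; setup.
  destruct (value_bounds s ltac:(lra)) as [HR HG].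
  pose proof mu_ge; pose proof (slope_bound s ltac:(lra)) as Sv.
  pose proof (ramp_bounds H e tau HH Htau s) as Hj.
  split; [lra|].
  unfold F; rewrite (profile_bend_zone f H P N a w tau HH Hw HP P2 HN N2 mu s) by lra; fold F.
  replace (- mu * ramp H (a - w - tau) tau s) with (- (mu * ramp H e tau s)) by (unfold e; ring).
  destruct (Rle_lt_dec (Derive F s ^ 2) (1 + G x r - m / 2)) as [Hv|Hv].
  - apply (mu_num_pos_of_small_slope x r (F s) (Derive F s) mu _ m); lra.
  - pose proof (mu_nonneg_of_steep s Hs Hv) as Hmu.
    destruct (profile_bend_slope_drop f H P N a w tau HH Hw Htau HP P2 HN N2 mu s Hmu Hs)
      as [D1 D2].
    fold F e in D1, D2; rewrite slope_at_start in D1, D2.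
    assert (Derive F s < - c') by (destruct (Rlt_le_dec (Derive F s) (- c')); [assumption|nra]).
    apply (mu_num_pos_of_strong_bend x r (F s) (Derive F s) mu _ m V); try lra;
      [apply pow_maj_Rabs, Sv|].
    assert (c < mu * ramp H e tau s * tau) by lra.
    nra.
Qed.

Lemma profile_exists : exists F e, e < a /\ smooth F /\ (forall s, a <= s -> F s = f s) /\
  (forall s, s <= e -> Derive_n F 2 s = 0) /\ Derive F e = c' /\ Rabs (F e - f a) < rho /\
  (forall s, e <= s <= b -> admissible x F s).
Proof.
  setup; exists F, e; split; [unfold e; lra|]; split; [apply smooth_profile; assumption|].
  split; [intros s Hs; apply (profile_after f H P N a w tau); assumption|].
  split; [intros s Hs; apply (profile_before f H P N a w tau); assumption|].
  split; [exact slope_at_start|]; split; [apply value_near; unfold e; lra|].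
  intros s Hs; destruct (Rle_lt_dec a s) as [Ha|Ha].
  - destruct (profile_after f H P N a w tau Hf HH Hw HP P0 P1 P2 HN N0 N1 N2 mu s Ha)
      as (E0 & E1 & E2).
    apply (admissible_eq x f); auto; apply Adm; lra.
  - destruct (Rle_lt_dec (a - w) s).
    + apply admissible_flat_zone; lra.
    + apply admissible_bend_zone; lra.
Qed.

End Estimates.

End RightBend.

Lemma slope_perturbation_bounds c c' eta eps m : 0 < c -> Rabs (c' - c) < eta -> eta <= eps ->
  eta <= c / 2 -> eta <= 1 -> (2 * c + 1) * eta <= m / 4 ->
  c - eps <= c' /\ c / 2 < c' /\ c' <= c + 1 /\ c' ^ 2 <= c ^ 2 + m / 4.
Proof.
  intros Hc Hc' H1 H2 H3 H4.
  pose proof (abs_mult_sub_le c' c' c c eta (Rlt_le _ _ Hc') (Rlt_le _ _ Hc') H3) as B.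
  rewrite (Rabs_pos_eq c) in B by lra; apply Rabs_le_between in B.
  apply Rabs_lt_between' in Hc'; simpl; lra.
Qed.

Lemma right_bend x f a b c rho : a < b -> smooth f -> C1_pos x ->
  (forall s, a <= s <= b -> admissible x f s) ->
  0 < c -> 0 < mu_num x (f a) c 0 -> Derive f a <= c ->
  0 < rho -> rho <= f a / 2 ->
  (forall r', Rabs (r' - f a) < rho -> G x (f a) - mu_num x (f a) c 0 / 4 < G x r') ->
  exists eta, 0 < eta /\ forall c', Rabs (c' - c) < eta ->
  exists g e, e < a /\ smooth g /\ (forall s, a <= s -> g s = f s) /\
    (forall s, s <= e -> Derive_n g 2 s = 0) /\ Derive g e = c' /\
    Rabs (g e - f a) < rho /\ (forall s, e <= s <= b -> admissible x g s).
Proof.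
  intros Hab Hf Hx Adm Hc Hm Hdc Hrho Hrho_r HGr.
  destruct smooth_step_exists as [H HH]; assert (Hh0 : 0 < H (1 / 2)) by apply HH.
  assert (Hr : 0 < f a) by apply (Adm a ltac:(lra)).
  set (m := mu_num x (f a) c 0) in *; set (V := c + Rabs (Derive f a) + 2).
  set (GA := V ^ 2 + Rabs (G x (f a)) + m + 2); set (k := Derive_n f 2 a).
  assert (HV : 0 < V) by (unfold V; pose proof (Rabs_pos (Derive f a)); lra).
  assert (HGA : 0 < GA) by (unfold GA; pose proof (Rabs_pos (G x (f a))); nra).
  destruct (mu_num_nbhd x _ _ _ Hx Hr (proj2 (Adm a ltac:(lra)))) as [dR0 [HdR0 Hbox]].
  destruct (at_right0_exists (fun t => (2 * V) * t <= rho / 2 /\ (2 * GA) * t <= c * f a))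
    as [tau [Htau [T1 T2]]]; [apply filter_and; apply at_right0_mult_le; nra|].
  set (eps := H (1 / 2) * tau * m / (50 * f a)).
  assert (Heps : 0 < eps) by (apply Rdiv_lt_0_compat; [repeat apply Rmult_lt_0_compat|]; lra).
  destruct (at_right0_exists
              (fun t => t <= dR0 /\ t <= 1 /\ (2 * Rabs (Derive f a) + 1) * t <= m / 2))
    as [dR [HdR (D1 & D2 & D3)]];
    [repeat apply filter_and; try apply at_right0_mult_le; try apply at_right0_le; lra|].
  destruct (at_right0_exists (fun t => t <= tau /\ t <= 1 /\ (Rabs k + 1) * t <= eps /\
     (Rabs k + 1) * t <= c / 2 /\ (Rabs k + 1 + 4 * V / (H (1 / 2) * tau)) * t <= dR / 4 /\
     forall s, Rabs (s - a) <= t -> Rabs (f s - f a) < dR / 2 /\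
       Rabs (Derive f s - Derive f a) < dR / 2 /\ Rabs (Derive_n f 2 s - k) < dR / 2))
    as [w [Hw (W1 & W2 & W3 & W4 & W5 & W6)]].
  { repeat apply filter_and; try apply at_right0_le; try apply at_right0_mult_le;
      try apply at_right0_jet; try exact Hf; lra. }
  destruct (at_right0_exists
              (fun t => t <= eps /\ t <= c / 2 /\ t <= 1 /\ (2 * c + 1) * t <= m / 4))
    as [eta [Heta (E1 & E2 & E3 & E4)]];
    [repeat apply filter_and; try apply at_right0_mult_le; try apply at_right0_le; lra|].
  exists eta; split; [exact Heta|intros c' Hc'].
  destruct (slope_perturbation_bounds c c' eta eps m Hc Hc' E1 E2 E3 E4) as (C1 & C2 & C3 & C4).
  apply (RightBend.profile_exists x f H a b c c' rho tau dR w); try assumption; try lra.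
  - unfold V in T1; lra.
  - fold m; lra.
  - intros r' v k' Hr' Hv Hk'; apply Hbox; lra.
Qed.

(** * Joining the two ends *)

Lemma join_by_line g h b e : smooth g -> smooth h ->
  (forall s, b <= s -> Derive_n g 2 s = 0) -> (forall s, s <= e -> Derive_n h 2 s = 0) ->
  Derive h e = Derive g b -> 0 < Derive g b -> g b < h e ->
  exists t f, b < e + t /\ g b + Derive g b * (e + t - b) = h e /\ smooth f /\
    (forall s, s < e + t -> locally s (fun y => g y = f y)) /\
    (forall s, b < s -> locally s (fun y => h (y - t) = f y)).
Proof.
  intros Hg Hh g2 h2 Hc Hc0 Hlt; set (c := Derive g b) in *.
  set (t := (h e - g b) / c + b - e).
  assert (Ht : g b + c * (e + t - b) = h e) by (unfold t; field; lra).
  assert (HbT : b < e + t)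
    by (assert (0 < (h e - g b) / c) by (apply Rdiv_lt_0_compat; lra); unfold t; lra).
  destruct (smooth_glue g (fun y => h (y - t)) b (e + t) HbT Hg (smooth_shift h t Hh))
    as [f (Hf & FL & FR)].
  - intros s Hs.
    destruct (affine_of_Derive2_zero g b s Hg) as [Eg _].
    { intros u Hu; rewrite Rmin_left, Rmax_right in Hu by lra; apply g2; lra. }
    destruct (affine_of_Derive2_zero h e (s - t) Hh) as [Eh _].
    { intros u Hu; rewrite Rmin_right, Rmax_left in Hu by lra; apply h2; lra. }
    rewrite Eg, Eh, Hc; fold c; rewrite <- Ht; ring.
  - exists t, f; repeat split; assumption.
Qed.

Lemma admissible_on_line x L b T : smooth L -> (forall s, b <= s -> Derive_n L 2 s = 0) ->
  0 <= Derive L b ->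
  (forall r, L b <= r <= L b + Derive L b * (T - b) -> 0 < r /\ 0 < mu_num x r (Derive L b) 0) ->
  forall s, b <= s <= T -> admissible x L s.
Proof.
  intros HL L2 Hc Hr s Hs.
  destruct (affine_of_Derive2_zero L b s HL) as [E0 E1].
  { intros u Hu; rewrite Rmin_left, Rmax_right in Hu by lra; apply L2; lra. }
  assert (Derive L b * (s - b) <= Derive L b * (T - b)) by (apply Rmult_le_compat_l; lra).
  assert (0 <= Derive L b * (s - b)) by (apply Rmult_le_pos; lra).
  unfold admissible; rewrite E1, (L2 s) by lra; rewrite E0; apply Hr; lra.
Qed.

Lemma join_bends x f1 f2 g h a1 b1 a2 b2 e : a1 < b1 -> e < a2 -> a2 < b2 ->
  smooth g -> (forall s, s <= (a1 + b1) / 2 -> g s = f1 s) ->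
  (forall s, b1 <= s -> Derive_n g 2 s = 0) -> (forall s, a1 <= s <= b1 -> admissible x g s) ->
  smooth h -> (forall s, a2 <= s -> h s = f2 s) ->
  (forall s, s <= e -> Derive_n h 2 s = 0) -> (forall s, e <= s <= b2 -> admissible x h s) ->
  Derive h e = Derive g b1 -> 0 < Derive g b1 -> g b1 < h e ->
  (forall r, g b1 <= r <= h e -> 0 < r /\ 0 < mu_num x r (Derive g b1) 0) ->
  exists t : R, b1 <= a2 + t /\
    exists f : R -> R,
      smooth f /\
      (forall s, a1 <= s <= b2 + t -> 0 < f s) /\
      (forall s, a1 <= s <= (a1 + b1) / 2 -> f s = f1 s) /\
      (forall s, (a2 + b2) / 2 + t <= s <= b2 + t -> f s = f2 (s - t)) /\
      (forall s, a1 <= s <= b2 + t -> 0 < mu x f s).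
Proof.
  intros Hab1 Hea2 Hab2 HL L1 L2 LA HR R1 R2 RA Hc Hc0 Hlt Hline.
  destruct (join_by_line g h b1 e HL HR L2 R2 Hc Hc0 Hlt) as (t & f & HT & Ht & Hf & FL & FR).
  assert (Adm : forall s, a1 <= s <= b2 + t -> admissible x f s).
  { intros s Hs; destruct (Rlt_le_dec s (e + t)) as [Hst|Hst].
    - apply (admissible_ext_loc x g _ _ (FL s Hst)).
      destruct (Rle_lt_dec s b1); [apply LA; lra|].
      apply (admissible_on_line x g b1 (e + t) HL L2); [lra| |lra].
      intros r' Hr'; apply Hline; lra.
    - assert (Hbs : b1 < s) by lra.
      apply (admissible_ext_loc x (fun y => h (y - t)) _ _ (FR s Hbs)).
      apply admissible_shift, RA; lra. }
  exists t; split; [lra|exists f; split; [exact Hf|]].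
  split; [intros s Hs; apply Adm, Hs|].
  split; [intros s Hs; rewrite <- (locally_singleton _ _ (FL s ltac:(lra))); apply L1; lra|].
  split; [intros s Hs; rewrite <- (locally_singleton _ _ (FR s ltac:(lra))); apply R1; lra|].
  intros s Hs; apply mu_pos_of_admissible, Adm, Hs.
Qed.

Theorem lemma4p4 (x f1 f2 : R -> R) (a1 b1 a2 b2 : R) :
  a1 < b1 -> a2 < b2 ->
  smooth f1 -> smooth f2 -> C1_pos x ->
  (forall s, a1 <= s <= b1 -> 0 < f1 s) ->
  (forall s, a2 <= s <= b2 -> 0 < f2 s) ->
  (* (i) *)
  (forall s, a1 <= s <= b1 -> 0 < mu x f1 s) ->
  (forall s, a2 <= s <= b2 -> 0 < mu x f2 s) ->
  (* (ii) *)
  f1 b1 < f2 a2 ->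
  (* (iii) *)
  0 < Derive f1 b1 ->
  Derive f1 b1 < sqrt (1 + x (f1 b1) ^ 2 + 2 * x (f1 b1) * Derive x (f1 b1) * f1 b1) ->
  (* (iv) *)
  Derive f2 a2 <= Derive f1 b1 ->
  (* (v) *)
  (forall r r', f1 b1 <= r -> r <= r' -> r' <= f2 a2 -> G x r <= G x r') ->
  exists t : R, b1 <= a2 + t /\
    exists f : R -> R,
      smooth f /\
      (forall s, a1 <= s <= b2 + t -> 0 < f s) /\
      (forall s, a1 <= s <= (a1 + b1) / 2 -> f s = f1 s) /\
      (forall s, (a2 + b2) / 2 + t <= s <= b2 + t -> f s = f2 (s - t)) /\
      (forall s, a1 <= s <= b2 + t -> 0 < mu x f s).
Proof.
  intros Hab1 Hab2 Hf1 Hf2 Hx Pf1 Pf2 Mf1 Mf2 Hr12 Hc Hsq Hd HG.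
  assert (Adm1 : forall s, a1 <= s <= b1 -> admissible x f1 s)
    by (intros; apply admissible_of_mu_pos; auto).
  assert (Adm2 : forall s, a2 <= s <= b2 -> admissible x f2 s)
    by (intros; apply admissible_of_mu_pos; auto).
  set (m := mu_num x (f1 b1) (Derive f1 b1) 0).
  assert (Hm : 0 < m) by (apply mu_num_zero_curv_pos; lra).
  assert (Hm2 : m <= mu_num x (f2 a2) (Derive f1 b1) 0)
    by (pose proof (HG (f1 b1) (f2 a2)); unfold m, mu_num; lra).
  assert (Hr1 : 0 < f1 b1) by (apply Pf1; lra).
  destruct (G_lower_near x (f1 b1) (m / 4) Hx Hr1 ltac:(lra)) as [d1 [Hd1 G1]].
  destruct (G_lower_near x (f2 a2) (m / 4) Hx ltac:(lra) ltac:(lra)) as [d2 [Hd2 G2]].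
  destruct (at_right0_exists (fun t => t <= (f2 a2 - f1 b1) / 2 /\ t <= d2))
    as [rho [Hrho [Rh1 Rh2]]]; [apply filter_and; apply at_right0_le; lra|].
  destruct (right_bend x f2 a2 b2 (Derive f1 b1) rho Hab2 Hf2 Hx Adm2 Hc ltac:(lra) Hd Hrho
              ltac:(lra)) as [eta [Heta Rb]]; [intros r' Hr'; specialize (G2 r' ltac:(lra)); lra|].
  destruct (at_right0_exists (fun t => t <= eta /\ t <= (f2 a2 - f1 b1) / 2 /\ t <= d1 /\
      t <= f1 b1 /\ t <= Derive f1 b1 / 2 /\ t <= 1 /\ (2 * Derive f1 b1 + 1) * t <= m / 4))
    as [delta [Hdelta (E1 & E2 & E3 & E4 & E5 & E6 & E7)]];
    [repeat apply filter_and; try apply at_right0_mult_le; try apply at_right0_le; lra|].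
  destruct (left_bend x f1 a1 b1 Hab1 Hf1 Hx Adm1 Hm delta Hdelta)
    as (g & HL & L1 & L2 & Lb & Lc & LA).
  destruct (Rb (Derive g b1) ltac:(lra)) as (h & e & He & HR & R1 & R2 & Rc & Re & RA).
  destruct (slope_perturbation_bounds _ _ delta delta m Hc Lc (Rle_refl _) E5 E6 E7)
    as (_ & _ & _ & Lc2).
  apply Rabs_lt_between' in Lb, Lc, Re.
  apply (join_bends x f1 f2 g h a1 b1 a2 b2 e); auto; try lra.
  intros r Hr; split; [lra|].
  apply (mu_num_line_pos x (f1 b1) (f2 a2) (Derive f1 b1) _ (g b1) (h e)); auto; try lra;
    intros r' Hr'; fold m; [apply G1|apply G2]; apply Rabs_lt_between'; lra.
Qed.
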